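(* Let $(\mathcal R,\tau)$ be a t-minimal Hausdorff geometric structure and $\mathcal S$ a lore of $(\mathcal R,\tau)$. (1) If $X$ is a loric $m$-manifold and $Y$ is a loric $n$-manifold, then $X\times Y$ is a loric $(m+n)$-manifold. (2) If $X$ and $Y$ are lorically homeomorphic and $X$ is a loric $n$-manifold, then so is $Y$. (3) Any definable open subset of a loric $n$-manifold is a loric $n$-manifold.
   Context: A structure $\mathcal R$ is geometric if $\operatorname{acl}$ satisfies exchange and $\mathcal R$ eliminates $\exists^\infty$; $\dim$ denotes acl-dimension, and $a\in X$ is generic over $A$ if $\dim(a/A)=\dim(X)$. ''Definable'' allows parameters. Given a topology $\tau$ on $R$ (extended to definable subsets of $R^n$ by product and subspace topologies), $(\mathcal R,\tau)$ is a Hausdorff geometric structure if: (1) $\tau$ is Hausdorff; (2) $\mathcal R$ is geometric and $\aleph_1$-saturated; (3) if $X\subset R^n$ is $A$-definable and $a\in\overline{\overline X-X}$ then $\dim(a/A)<\dim(X)$; (4) if $X$ is definable over a countable $A$, $a\in X$ generic over $A$, and $B\supseteq A$ countable, every neighborhood of $a$ contains a generic of $X$ over $B$; (5) if $X,Y$, $Z\subset X\times Y$ are $A$-definable of the same dimension with both projections of $Z$ finite-to-one and $(x,y)\in Z$ generic over $A$, then $Z$ restricted to some $U\times V$ ($U\ni x$, $V\ni y$ open) is the graph of a homeomorphism $U\to V$. It is t-minimal if moreover $\tau$ has a basis given by the instances of a parameter-free formula, and $R$ has no isolated points. A lore is a collection $\mathcal S$ of definable sets (''loric sets'') such that: (i)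 $R$ and the diagonal of $R^2$ are loric, and loric sets are closed under finite products, finite intersections, coordinate permutations; (ii) if $f:X\to Y$ is a definable homeomorphism with $X$ and the graph of $f$ loric, then $Y$ is loric; (iii) definable open subsets of loric sets are loric, and a definable set with an open cover by loric sets is loric; (iv) every nonempty $A$-definable $X$ has a relatively open $A$-definable loric subset $X'$ with $\dim(X-X')<\dim(X)$. A loric map is a continuous function with loric graph; a loric homeomorphism is a loric map that is a homeomorphism; $X,Y$ are lorically homeomorphic if there is a loric homeomorphism $X\to Y$. For definable $X$ with $\dim(X)=n$, $x\in X$ is a loric manifold point if some definable relatively open $U$ with $x\in U\subset X$ is lorically homeomorphic to an open subset of $R^n$; $X^{lman}$ is the set of such points. A loric $n$-manifold is a definable set $Y$ with $\dim(Y)=n$ and $Y^{lman}=Y$. *)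

From HB Require Import structures.
From mathcomp Require Import all_boot fingroup perm.
From mathcomp Require Import boolp classical_sets cardinality topology.

Set Implicit Arguments.
Unset Strict Implicit.
Unset Printing Implicit Defensive.

Local Open Scope classical_set_scope.

Notation tup R n := ('I_n -> R).

Definition cat_t {R : Type} {m n : nat} (x : tup R m) (y : tup R n) : tup R (m + n) :=
  fun i => match split i with inl j => x j | inr j => y j end.

Definition setXt {R : Type} {m n : nat} (X : set (tup R m)) (Y : set (tup R n))
  : set (tup R (m + n)) :=
  [set z | exists x y, [/\ z = cat_t x y, X x & Y y]].

Definition graph_on {R : Type} {m n : nat} (X : set (tup R m)) (f : tup R m -> tup R n)
  : set (tup R (m + n)) :=
  [set z | exists2 x, X x & z = cat_t x (f x)].

Definition perm_set {R : Type} {n : nat} (s : {perm 'I_n}) (X : set (tup R n)) : set (tup R n) :=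
  [set x | X (fun i => x (s i))].

Definition diag2 {R : Type} : set (tup R 2) :=
  [set x | x (@Ordinal 2 0 isT) = x (@Ordinal 2 1 isT)].

(** A "structure" on R, given (van den Dries style) by its 0-definable sets
    Def n ⊆ P(R^n). *)
Definition is_structure {R : Type} (Def : forall n, set (set (tup R n))) : Prop :=
  [/\ (forall n, Def n setT),
      (forall n X, Def n X -> Def n (~` X)),
      (forall n X Y, Def n X -> Def n Y -> Def n (X `|` Y)) /\
      (forall m n X Y, Def m X -> Def n Y -> Def (m + n) (setXt X Y)),
      (forall n (s : {perm 'I_n}) X, Def n X -> Def n (perm_set s X)) &
      Def 2 diag2 /\
      (forall n k Z, Def (n + k) Z -> Def n [set x | exists y : tup R k, Z (cat_t x y)])].

Definition Adef {R : Type} (Def : forall n, set (set (tup R n))) (A : set R) {n : nat}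
  (X : set (tup R n)) : Prop :=
  exists k (a : tup R k), (forall i, A (a i)) /\
    exists2 Z, Def (n + k) Z & X = [set x | Z (cat_t x a)].

Definition definable {R : Type} (Def : forall n, set (set (tup R n))) {n : nat}
  (X : set (tup R n)) : Prop := Adef Def setT X.

Definition acl {R : Type} (Def : forall n, set (set (tup R n))) (A : set R) : set R :=
  [set b | exists X : set (tup R 1), [/\ Adef Def A X, finite_set X & X (fun _ => b)]].

Definition dimt_le {R : Type} (Def : forall n, set (set (tup R n))) {n : nat}
  (a : tup R n) (A : set R) (k : nat) : Prop :=
  exists I : seq 'I_n, (size I <= k)%N /\
    forall i, acl Def (A `|` [set b | exists2 j, j \in I & b = a j]) (a i).

Definition dimt_pred {R : Type} (Def : forall n, set (set (tup R n))) {n : nat}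
  (a : tup R n) (A : set R) : pred nat :=
  fun k => `[< dimt_le Def a A k >] || (k == n).

Lemma dimt_pred_ex {R : Type} (Def : forall n, set (set (tup R n))) {n : nat}
  (a : tup R n) (A : set R) : exists k, dimt_pred Def a A k.
Proof. by exists n; rewrite /dimt_pred eqxx orbT. Qed.

Definition dimt {R : Type} (Def : forall n, set (set (tup R n))) {n : nat}
  (a : tup R n) (A : set R) : nat := ex_minn (dimt_pred_ex Def a A).

(** dim(X) = d  (X nonempty): the supremum of dim(a/A) over a in X and A over
    which X is defined (in an aleph_1-saturated geometric structure this is the
    usual max{dim(a/A) : a in X} for any small A defining X). *)
Definition hasdim {R : Type} (Def : forall n, set (set (tup R n))) {n : nat}
  (X : set (tup R n)) (d : nat) : Prop :=
  (exists A a, [/\ Adef Def A X, X a & dimt Def a A = d]) /\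
  (forall A a, Adef Def A X -> X a -> (dimt Def a A <= d)%N).

(** dim(X) < d (with dim(empty) = -oo) *)
Definition dim_lt {R : Type} (Def : forall n, set (set (tup R n))) {n : nat}
  (X : set (tup R n)) (d : nat) : Prop :=
  forall A a, Adef Def A X -> X a -> (dimt Def a A < d)%N.

Definition openn {R : topologicalType} {n : nat} (U : set (tup R n)) : Prop :=
  forall x, U x -> exists O : 'I_n -> set R,
    (forall i, open (O i) /\ O i (x i)) /\ (forall y, (forall i, O i (y i)) -> U y).

Definition clos {R : topologicalType} {n : nat} (X : set (tup R n)) : set (tup R n) :=
  [set a | forall U, openn U -> U a -> exists y, U y /\ X y].

Definition ropen {R : topologicalType} {n : nat} (X U : set (tup R n)) : Prop :=
  exists O, openn O /\ U = X `&` O.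

Definition contin_on {R : topologicalType} {m n : nat} (X : set (tup R m))
  (f : tup R m -> tup R n) : Prop :=
  forall x, X x -> forall O, openn O -> O (f x) ->
    exists W, [/\ openn W, W x & forall y, X y -> W y -> O (f y)].

Definition homeo {R : topologicalType} {m n : nat} (X : set (tup R m)) (Y : set (tup R n))
  (f : tup R m -> tup R n) : Prop :=
  (forall x, X x -> Y (f x)) /\
  exists g : tup R n -> tup R m,
    [/\ (forall y, Y y -> X (g y)), (forall x, X x -> g (f x) = x),
        (forall y, Y y -> f (g y) = y), contin_on X f & contin_on Y g].

Definition geometric {R : Type} (Def : forall n, set (set (tup R n))) : Prop :=
  (forall (A : set R) b c, acl Def (A `|` [set c]) b -> ~ acl Def A b ->
      acl Def (A `|` [set b]) c) /\
  (forall k (Z : set (tup R (1 + k))), Def (1 + k) Z -> exists N : nat,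
      forall b : tup R k, finite_set [set x : tup R 1 | Z (cat_t x b)] ->
        exists f : 'I_N -> tup R 1, [set x : tup R 1 | Z (cat_t x b)] `<=` range f).

Definition aleph1_saturated {R : Type} (Def : forall n, set (set (tup R n))) : Prop :=
  forall (A : set R) n (F : nat -> set (tup R n)), countable A ->
    (forall i, Adef Def A (F i)) ->
    (forall k, exists x, forall i, (i <= k)%N -> F i x) ->
    exists x, forall i, F i x.

Definition hausdorff_geometric {R : topologicalType}
  (Def : forall n, set (set (tup R n))) : Prop :=
  [/\ is_structure Def /\ hausdorff_space R,
      geometric Def /\ aleph1_saturated Def,
      (* (3) *)
      (forall n A (X : set (tup R n)) d a, Adef Def A X -> hasdim Def X d ->
          clos (clos X `\` X) a -> (dimt Def a A < d)%N),
      (* (4) *)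
      (forall n (A B : set R) (X : set (tup R n)) d a, countable A -> countable B ->
          A `<=` B -> Adef Def A X -> hasdim Def X d -> X a -> dimt Def a A = d ->
          forall U, openn U -> U a -> exists b, [/\ U b, X b & dimt Def b B = d]) &
      (forall m n A (X : set (tup R m)) (Y : set (tup R n)) Z d x y,
          Adef Def A X -> Adef Def A Y -> Adef Def A Z ->
          Z `<=` setXt X Y -> hasdim Def X d -> hasdim Def Y d -> hasdim Def Z d ->
          (forall x', finite_set [set y' | Z (cat_t x' y')]) ->
          (forall y', finite_set [set x' | Z (cat_t x' y')]) ->
          Z (cat_t x y) -> dimt Def (cat_t x y) A = d ->
          exists U V (f : tup R m -> tup R n),
            [/\ ropen X U /\ U x, ropen Y V /\ V y, homeo U V f &
                Z `&` setXt U V = graph_on U f])].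

Definition t_minimal {R : topologicalType} (Def : forall n, set (set (tup R n))) : Prop :=
  [/\ hausdorff_geometric Def,
      (exists k (B : set (tup R (1 + k))), Def (1 + k) B /\
         (forall b : tup R k, open [set r : R | B (cat_t (fun _ => r) b)]) /\
         (forall (U : set R) r, open U -> U r -> exists b : tup R k,
             B (cat_t (fun _ => r) b) /\ [set r' : R | B (cat_t (fun _ => r') b)] `<=` U)) &
      (forall r : R, ~ open [set r])].

Definition lore {R : topologicalType} (Def : forall n, set (set (tup R n)))
  (S : forall n, set (set (tup R n))) : Prop :=
  [/\ (forall n X, S n X -> definable Def X),
      [/\ S 1 setT, S 2 diag2,
          (forall m n X Y, S m X -> S n Y -> S (m + n) (setXt X Y)),
          (forall n X Y, S n X -> S n Y -> S n (X `&` Y)) &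
          (forall n (s : {perm 'I_n}) X, S n X -> S n (perm_set s X))],
      (forall m n (X : set (tup R m)) (Y : set (tup R n)) f,
          homeo X Y f -> S m X -> S (m + n) (graph_on X f) -> S n Y),
      (forall n X U, S n X -> definable Def U -> ropen X U -> S n U) /\
      (forall n X, definable Def X ->
          (forall x, X x -> exists U, [/\ ropen X U, U x & S n U]) -> S n X) &
      (* (iv) *)
      (forall n A (X : set (tup R n)), Adef Def A X -> X !=set0 ->
          exists X', [/\ Adef Def A X', S n X', ropen X X' &
                       forall d, hasdim Def X d -> dim_lt Def (X `\` X') d])].

Definition loric_map {R : topologicalType} (S : forall n, set (set (tup R n)))
  {m n : nat} (X : set (tup R m)) (f : tup R m -> tup R n) : Prop :=
  contin_on X f /\ S (m + n) (graph_on X f).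

Definition loric_homeo {R : topologicalType} (S : forall n, set (set (tup R n)))
  {m n : nat} (X : set (tup R m)) (Y : set (tup R n)) (f : tup R m -> tup R n) : Prop :=
  loric_map S X f /\ homeo X Y f.

Definition lorically_homeomorphic {R : topologicalType} (S : forall n, set (set (tup R n)))
  {m n : nat} (X : set (tup R m)) (Y : set (tup R n)) : Prop :=
  exists f, loric_homeo S X Y f.

Definition lman_pt {R : topologicalType} (Def : forall n, set (set (tup R n)))
  (S : forall n, set (set (tup R n))) {k : nat} (X : set (tup R k)) (n : nat)
  (x : tup R k) : Prop :=
  exists (U : set (tup R k)) (W : set (tup R n)),
    [/\ definable Def U, ropen X U, U x, openn W & lorically_homeomorphic S U W].

Definition loric_manifold {R : topologicalType} (Def : forall n, set (set (tup R n)))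
  (S : forall n, set (set (tup R n))) (n : nat) {k : nat} (Y : set (tup R k)) : Prop :=
  [/\ definable Def Y, hasdim Def Y n & forall y, Y y -> lman_pt Def S Y n y].

(* The manifold points behave well under the three constructions: a product of charts is
   a chart of the product; if f : X -> Y is a loric homeomorphism and phi a chart of X on
   U, then phi composed with the inverse of f restricted to f(U) is a chart of Y; and a
   chart restricts to a definable relatively open subset, whose image stays open.  What
   remains is dimension.  In the acl-pregeometry, dim(a/A) is the length of any acl-basis
   of a over A (Steinitz exchange), and axiom (4) provides generic points over any finite
   set of parameters.  Hence dim(X x Y) = dim X + dim Y (a generic in X, then b generic
   in Y over a), and an injective map with definable graph does not raise dimension (a
   generic point is algebraic over its image).  Finally a nonempty definable open subset
   of R^n has dimension n: using the definable basis of t-minimality, pick the coordinates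
   one at a time in small basic open sets, each outside the acl of the previous ones.
   This is possible because a definable open subset of R of dimension 0 would, by (3),
   contain a point in the frontier of its complement of a finite set. *)

From HB Require Import structures.
From mathcomp Require Import all_boot fingroup perm.
From mathcomp Require Import boolp classical_sets cardinality topology.
Local Open Scope classical_set_scope.
Set Implicit Arguments.
Unset Strict Implicit.
Unset Printing Implicit Defensive.

Section Tuples.
Context {T : Type}.

Definition tup0 : 'I_0 -> T := fun i => False_rect T (notF (ltn_ord i)).

Lemma tup0E (x : 'I_0 -> T) : x = tup0.
Proof. by apply: funext => i; case: (notF (ltn_ord i)). Qed.

Definition lsubt {m n} (z : 'I_(m + n) -> T) : 'I_m -> T := fun i => z (lshift n i).
Definition rsubt {m n} (z : 'I_(m + n) -> T) : 'I_n -> T := fun j => z (rshift m j).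

Definition cat_map {U m n p q} (f : ('I_m -> T) -> ('I_p -> U)) (g : ('I_n -> T) -> ('I_q -> U))
  (w : 'I_(m + n) -> T) : 'I_(p + q) -> U := cat_t (f (lsubt w)) (g (rsubt w)).

Lemma cat_t_lshift {m n} (x : 'I_m -> T) (y : 'I_n -> T) i : cat_t x y (lshift n i) = x i.
Proof. by rewrite /cat_t (@unsplitK m n (inl i)). Qed.

Lemma cat_t_rshift {m n} (x : 'I_m -> T) (y : 'I_n -> T) i : cat_t x y (rshift m i) = y i.
Proof. by rewrite /cat_t (@unsplitK m n (inr i)). Qed.

Lemma lsubt_cat {m n} (x : 'I_m -> T) (y : 'I_n -> T) : lsubt (cat_t x y) = x.
Proof. by apply: funext => i; rewrite /lsubt cat_t_lshift. Qed.

Lemma rsubt_cat {m n} (x : 'I_m -> T) (y : 'I_n -> T) : rsubt (cat_t x y) = y.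
Proof. by apply: funext => i; rewrite /rsubt cat_t_rshift. Qed.

Lemma cat_t_sub {m n} (z : 'I_(m + n) -> T) : z = cat_t (lsubt z) (rsubt z).
Proof.
apply: funext => i; rewrite /cat_t /lsubt /rsubt.
by case: split_ordP => j ->; rewrite ?(@unsplitK m n (inl j)) ?(@unsplitK m n (inr j)).
Qed.

Lemma cat_t_inj {m n} (x x' : 'I_m -> T) (y y' : 'I_n -> T) :
  cat_t x y = cat_t x' y' -> x = x' /\ y = y'.
Proof.
move=> e; split; first by rewrite -(lsubt_cat x y) e lsubt_cat.
by rewrite -(rsubt_cat x y) e rsubt_cat.
Qed.

Lemma cat_t_comp {U m n p} (f : 'I_m -> 'I_p) (g : 'I_n -> 'I_p) (z : 'I_p -> U) :
  (fun i => z (cat_t f g i)) = cat_t (fun i => z (f i)) (fun i => z (g i)).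
Proof. by apply: funext => i; rewrite /cat_t; case: split. Qed.

Lemma cat_t_compE {U m n p} (f : 'I_m -> 'I_p) (g : 'I_n -> 'I_p) (z : 'I_p -> U) x y :
  (forall i, z (f i) = x i) -> (forall j, z (g j) = y j) ->
  (fun i => z (cat_t f g i)) = cat_t x y.
Proof. by move=> hf hg; rewrite cat_t_comp; congr cat_t; apply: funext. Qed.

Lemma tup1E (x : 'I_1 -> T) : x = (fun _ => x ord0).
Proof. by apply: funext => i; rewrite ord1. Qed.

Lemma setXtE {m n} (X : set ('I_m -> T)) (Y : set ('I_n -> T)) z :
  setXt X Y z <-> X (lsubt z) /\ Y (rsubt z).
Proof.
split; first by case=> x [y [-> Xx Yy]]; rewrite lsubt_cat rsubt_cat.
by case=> Xx Yy; exists (lsubt z), (rsubt z); split => //; apply: cat_t_sub.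
Qed.

Lemma setXt_cat {m n} (X : set ('I_m -> T)) (Y : set ('I_n -> T)) x y :
  setXt X Y (cat_t x y) <-> X x /\ Y y.
Proof. by rewrite setXtE lsubt_cat rsubt_cat. Qed.

Lemma graph_on_cat {m n} (X : set ('I_m -> T)) (f : ('I_m -> T) -> ('I_n -> T)) x y :
  graph_on X f (cat_t x y) <-> X x /\ y = f x.
Proof.
split; first by case=> x' Xx' /cat_t_inj [-> ->].
by case=> Xx ->; exists x.
Qed.

Lemma graph_onE {m n} (X : set ('I_m -> T)) (f : ('I_m -> T) -> ('I_n -> T)) z :
  graph_on X f z <-> X (lsubt z) /\ rsubt z = f (lsubt z).
Proof. by rewrite {1}(cat_t_sub z) graph_on_cat. Qed.

Lemma finite_tuple_set k (F : 'I_k -> set T) :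
  (forall i, finite_set (F i)) -> finite_set [set q | forall i, F i (q i)].
Proof.
elim: k F => [|k IH] F hF.
  by apply: sub_finite_set (finite_set1 tup0) => q _; apply: tup0E.
have fX := finite_setX (hF ord0) (IH _ (fun i => hF (rshift 1 i))).
apply: sub_finite_set (finite_image (fun p => cat_t (fun _ : 'I_1 => p.1) p.2) fX) => q Fq.
exists (q ord0, rsubt q); first by split => /=.
rewrite /= [RHS]cat_t_sub (tup1E (lsubt q)) /lsubt.
by rewrite (_ : lshift k ord0 = ord0) //; apply: val_inj.
Qed.

End Tuples.

Section CoordinateFamilies.
Context (R : Type) (P : forall n, set (set ('I_n -> R))).
Arguments P : clear implicits.
Hypothesis P_setT : forall n, P n setT.
Hypothesis P_setI : forall n X Y, P n X -> P n Y -> P n (X `&` Y).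
Hypothesis P_setXt : forall m n X Y, P m X -> P n Y -> P (m + n) (setXt X Y).
Hypothesis P_perm : forall n (s : {perm 'I_n}) X, P n X -> P n (perm_set s X).
Hypothesis P_diag : P 2 diag2.

Lemma P_ext {n} (X Y : set ('I_n -> R)) : (forall x, X x <-> Y x) -> P n X -> P n Y.
Proof. by move=> /predeqP ->. Qed.

Lemma P_cast {n n'} (e : n = n') {X} :
  P n X -> P n' [set y | X (fun i => y (cast_ord e i))].
Proof.
case: n' / e; apply: P_ext => x /=.
by have -> : (fun i => x (cast_ord (erefl n) i)) = x by apply: funext => i; rewrite cast_ord_id.
Qed.

Lemma P_coord_eq N (p q : 'I_N) : P N [set z | z p = z q].
Proof.
have [->|npq] := eqVneq p q; first by apply: P_ext (P_setT N) => z; split.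
have N2 : 2 <= N.
  case: N p q npq => [[]//|[|N]] p q; last by [].
  by rewrite (ord1 p) (ord1 q) eqxx.
have e : 2 + (N - 2) = N by rewrite subnKC.
have := P_cast e (P_setXt P_diag (P_setT (N - 2))).
set c0 := cast_ord e (lshift (N - 2) (@Ordinal 2 0 isT)).
set c1 := cast_ord e (lshift (N - 2) (@Ordinal 2 1 isT)).
have c01 : c0 != c1 by rewrite /c0 /c1 (inj_eq (@cast_ord_inj _ _ _)) eq_lshift.
(* a permutation moving the two diagonal coordinates [c0, c1] onto [p, q] *)
set s1 := tperm c0 p; set s := (s1 * tperm (s1 c1) q)%g.
move=> /(@P_perm _ s); apply: P_ext => z /=.
rewrite /perm_set /= setXtE /lsubt /diag2 /=.
have -> : s c0 = p.
  rewrite permM /s1 tpermL tpermD //; last by rewrite eq_sym.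
  by rewrite -{2}(tpermL c0 p) (inj_eq perm_inj) eq_sym.
have -> : s c1 = q by rewrite permM tpermL.
by split => [[]|].
Qed.

Lemma P_bigI N (I : finType) (F : I -> set ('I_N -> R)) :
  (forall i, P N (F i)) -> P N [set z | forall i, F i z].
Proof.
move=> hF; suff: P N [set z | forall i, i \in enum I -> F i z].
  by apply: P_ext => z /=; split => h i; [apply: h; rewrite mem_enum | move=> _; apply: h].
elim: (enum I) => [|i s IH]; first by apply: P_ext (P_setT N) => z; split.
apply: P_ext (P_setI (hF i) IH) => z /=; split.
  by case=> h1 h2 j; rewrite inE => /orP[/eqP->|]//; apply: h2.
by move=> h; split => [|j hj]; apply: h; rewrite inE ?eqxx ?hj ?orbT.
Qed.

End CoordinateFamilies.

Section Definable.
Context {R : Type} {Def : forall n, set (set ('I_n -> R))}.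
Arguments Def : clear implicits.
Hypothesis hs : is_structure Def.

Lemma def_setT n : Def n setT. Proof. by case: hs. Qed.
Lemma def_setC n X : Def n X -> Def n (~` X). Proof. by case: hs => _ h _ _ _; apply: h. Qed.
Lemma def_setU n X Y : Def n X -> Def n Y -> Def n (X `|` Y).
Proof. by case: hs => _ _ [h _] _ _; apply: h. Qed.
Lemma def_setXt m n X Y : Def m X -> Def n Y -> Def (m + n) (setXt X Y).
Proof. by case: hs => _ _ [_ h] _ _; apply: h. Qed.
Lemma def_perm n (s : {perm 'I_n}) X : Def n X -> Def n (perm_set s X).
Proof. by case: hs => _ _ _ h _; apply: h. Qed.
Lemma def_diag : Def 2 diag2. Proof. by case: hs => _ _ _ _ []. Qed.
Lemma def_exists n k Z : Def (n + k) Z -> Def n [set x | exists y : 'I_k -> R, Z (cat_t x y)].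
Proof. by case: hs => _ _ _ _ [_ h]; apply: h. Qed.

Lemma def_setI n X Y : Def n X -> Def n Y -> Def n (X `&` Y).
Proof.
move=> hX hY; have := def_setC (def_setU (def_setC hX) (def_setC hY)).
by rewrite setCU !setCK.
Qed.

Lemma def_ext n (X Y : set ('I_n -> R)) : (forall x, X x <-> Y x) -> Def n X -> Def n Y.
Proof. by move=> /predeqP ->. Qed.

Lemma def_coord_eq N (p q : 'I_N) : Def N [set z | z p = z q].
Proof. exact: (P_coord_eq def_setT def_setXt def_perm def_diag). Qed.

Lemma def_bigI N (I : finType) (F : I -> set ('I_N -> R)) :
  (forall i, Def N (F i)) -> Def N [set z | forall i, F i z].
Proof. exact: (P_bigI def_setT def_setI). Qed.

Lemma def_reindex m n (h : 'I_m -> 'I_n) X : Def m X -> Def n [set y | X (fun i => y (h i))].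
Proof.
move=> hX.
have E := def_bigI (F := fun j : 'I_m =>
  [set z : 'I_(n + m) -> R | z (lshift m (h j)) = z (rshift n j)]) (fun j => def_coord_eq _ _).
apply: def_ext (def_exists (def_setI (def_setXt (def_setT n) hX) E)) => y /=; split.
  case=> x [/setXt_cat [_ Xx] /= hj].
  suff -> : (fun i => y (h i)) = x by [].
  by apply: funext => i; have := hj i; rewrite cat_t_lshift cat_t_rshift.
move=> Xy; exists (fun i => y (h i)); split; first by apply/setXt_cat.
by move=> j /=; rewrite cat_t_lshift cat_t_rshift.
Qed.

Lemma Adef_ext A n (X Y : set ('I_n -> R)) :
  (forall x, X x <-> Y x) -> Adef Def A X -> Adef Def A Y.
Proof. by move=> /predeqP ->. Qed.

Lemma Adef_params_sub A B n (X : set ('I_n -> R)) : A `<=` B -> Adef Def A X -> Adef Def B X.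
Proof. by move=> AB [k [a [ha hZ]]]; exists k, a; split => // i; apply: AB. Qed.

Lemma Adef_of_def A n (X : set ('I_n -> R)) : Def n X -> Adef Def A X.
Proof.
move=> hX; exists 0, tup0; split; first by move=> i; case: (notF (ltn_ord i)).
exists [set w : 'I_(n + 0) -> R | X (fun i => w (lshift 0 i))]; first exact: def_reindex.
apply/predeqP => x /=.
by have -> : (fun i => cat_t x tup0 (lshift 0 i)) = x by apply: funext => i; rewrite cat_t_lshift.
Qed.

Lemma Adef_setT A n : Adef Def A (@setT ('I_n -> R)).
Proof. exact/Adef_of_def/def_setT. Qed.

Lemma Adef_reindex A m n (h : 'I_m -> 'I_n) (X : set ('I_m -> R)) :
  Adef Def A X -> Adef Def A [set y | X (fun i => y (h i))].
Proof.
move=> [k [a [ha [Z hZ ->]]]]; exists k, a; split => //.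
exists [set w : 'I_(n + k) -> R |
  Z (fun i => w (cat_t (fun j => lshift k (h j)) (fun j => rshift n j) i))].
  exact: def_reindex.
apply/predeqP => y /=; rewrite cat_t_comp.
have -> : (fun j => cat_t y a (lshift k (h j))) = (fun j => y (h j)).
  by apply: funext => j; rewrite cat_t_lshift.
by have -> : (fun j => cat_t y a (rshift n j)) = a by apply: funext => j; rewrite cat_t_rshift.
Qed.

Lemma Adef_common_params A n (X Y : set ('I_n -> R)) : Adef Def A X -> Adef Def A Y ->
  exists k (c : 'I_k -> R), (forall i, A (c i)) /\ exists Z1 Z2,
    [/\ Def (n + k) Z1, Def (n + k) Z2, X = [set x | Z1 (cat_t x c)] & Y = [set x | Z2 (cat_t x c)]].
Proof.
move=> [k1 [a [ha [Z1 hZ1 ->]]]] [k2 [b [hb [Z2 hZ2 ->]]]].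
exists (k1 + k2), (cat_t a b); split; first by move=> i; rewrite /cat_t; case: split.
exists [set w : 'I_(n + (k1 + k2)) -> R |
  Z1 (fun i => w (cat_t (fun j => lshift (k1 + k2) j) (fun j => rshift n (lshift k2 j)) i))].
exists [set w : 'I_(n + (k1 + k2)) -> R |
  Z2 (fun i => w (cat_t (fun j => lshift (k1 + k2) j) (fun j => rshift n (rshift k1 j)) i))].
split; try exact: def_reindex; apply/predeqP => y /=; rewrite cat_t_comp.
  have -> : (fun j => cat_t y (cat_t a b) (lshift (k1 + k2) j)) = y.
    by apply: funext => j; rewrite cat_t_lshift.
  have -> : (fun j => cat_t y (cat_t a b) (rshift n (lshift k2 j))) = a.
    by apply: funext => j; rewrite cat_t_rshift cat_t_lshift.
  by [].
have -> : (fun j => cat_t y (cat_t a b) (lshift (k1 + k2) j)) = y.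
  by apply: funext => j; rewrite cat_t_lshift.
have -> : (fun j => cat_t y (cat_t a b) (rshift n (rshift k1 j))) = b.
  by apply: funext => j; rewrite !cat_t_rshift.
by [].
Qed.

Lemma Adef_setI A n (X Y : set ('I_n -> R)) :
  Adef Def A X -> Adef Def A Y -> Adef Def A (X `&` Y).
Proof.
move=> hX hY; have [k [c [hc [Z1 [Z2 [h1 h2 -> ->]]]]]] := Adef_common_params hX hY.
by exists k, c; split => //; exists (Z1 `&` Z2); [exact: def_setI|].
Qed.

Lemma Adef_setC A n (X : set ('I_n -> R)) : Adef Def A X -> Adef Def A (~` X).
Proof.
move=> [k [a [ha [Z hZ ->]]]]; exists k, a; split => //.
by exists (~` Z); [exact: def_setC|].
Qed.

Lemma Adef_setD A n (X Y : set ('I_n -> R)) :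
  Adef Def A X -> Adef Def A Y -> Adef Def A (X `\` Y).
Proof. by move=> hX hY; apply: Adef_setI => //; apply: Adef_setC. Qed.

Lemma Adef_bigI A N (I : finType) (F : I -> set ('I_N -> R)) :
  (forall i, Adef Def A (F i)) -> Adef Def A [set z | forall i, F i z].
Proof. exact: (P_bigI (P := fun n => Adef Def A) (@Adef_setT A) (@Adef_setI A)). Qed.

Lemma Adef_exists A n k (Z : set ('I_(n + k) -> R)) :
  Adef Def A Z -> Adef Def A [set x | exists y : 'I_k -> R, Z (cat_t x y)].
Proof.
move=> [ka [a [ha [Z0 hZ0 ->]]]]; exists ka, a; split => //.
pose h : 'I_((n + k) + ka) -> 'I_((n + ka) + k) :=
  cat_t (cat_t (fun i => lshift k (lshift ka i)) (fun j => rshift (n + ka) j))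
        (fun l => lshift k (rshift n l)).
have hE y x : (fun i => cat_t (cat_t x a) y (h i)) = cat_t (cat_t x y) a.
  rewrite /h !cat_t_comp; congr cat_t; last by apply: funext => l; rewrite cat_t_lshift cat_t_rshift.
  by congr cat_t; apply: funext => i; rewrite ?cat_t_lshift ?cat_t_rshift.
exists [set u : 'I_(n + ka) -> R | exists y : 'I_k -> R, Z0 (fun i => cat_t u y (h i))].
  by apply: (def_exists (Z := [set v | Z0 (fun i => v (h i))])); apply: def_reindex.
by apply/predeqP => x /=; split; case=> y hy; exists y; [rewrite hE | rewrite hE in hy].
Qed.

Lemma Adef_swap A m n (Z : set ('I_(m + n) -> R)) :
  Adef Def A Z -> Adef Def A [set w : 'I_(n + m) -> R | Z (cat_t (rsubt w) (lsubt w))].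
Proof.
move=> /(Adef_reindex (cat_t (fun i => rshift n i) (fun j => lshift m j))).
by apply: Adef_ext => w /=; rewrite cat_t_comp.
Qed.

Lemma Adef_exists_l A m n (Z : set ('I_(m + n) -> R)) :
  Adef Def A Z -> Adef Def A [set y | exists x : 'I_m -> R, Z (cat_t x y)].
Proof.
move=> /Adef_swap /Adef_exists; apply: Adef_ext => y /=.
by split; case=> x hx; exists x; move: hx; rewrite lsubt_cat rsubt_cat.
Qed.

Lemma Adef_fiber A m n (Z : set ('I_(m + n) -> R)) (y : 'I_n -> R) :
  Adef Def A Z -> (forall j, A (y j)) -> Adef Def A [set x | Z (cat_t x y)].
Proof.
move=> [k [c [hc [Z0 hZ0 ->]]]] hy.
exists (n + k), (cat_t y c); split; first by move=> i; rewrite /cat_t; case: split.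
pose h : 'I_((m + n) + k) -> 'I_(m + (n + k)) :=
  cat_t (cat_t (fun i => lshift (n + k) i) (fun j => rshift m (lshift k j)))
        (fun l => rshift m (rshift n l)).
exists [set w | Z0 (fun i => w (h i))]; first exact: def_reindex.
apply/predeqP => x /=; rewrite /h !cat_t_comp.
have -> : (fun i => cat_t x (cat_t y c) (lshift (n + k) i)) = x.
  by apply: funext => i; rewrite cat_t_lshift.
have -> : (fun i => cat_t x (cat_t y c) (rshift m (lshift k i))) = y.
  by apply: funext => i; rewrite cat_t_rshift cat_t_lshift.
by have -> : (fun i => cat_t x (cat_t y c) (rshift m (rshift n i))) = c
  by apply: funext => i; rewrite !cat_t_rshift.
Qed.

Lemma Adef_set1 A (b : R) : A b -> Adef Def A [set (fun _ : 'I_1 => b)].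
Proof.
move=> Ab; exists 1, (fun _ => b); split => //.
exists [set w : 'I_(1 + 1) -> R | w (lshift 1 ord0) = w (rshift 1 ord0)].
  exact: def_coord_eq.
by apply/predeqP => x /=; rewrite cat_t_lshift cat_t_rshift; split => h; rewrite (tup1E x) h.
Qed.

Lemma Adef_finite_params A n (X : set ('I_n -> R)) : Adef Def A X ->
  exists A0, [/\ finite_set A0, A0 `<=` A & Adef Def A0 X].
Proof.
move=> [k [a [ha hZ]]]; exists (range a); split.
- exact/finite_image/finite_finset.
- by move=> _ [i _ <-].
- by exists k, a; split => // i; exists i.
Qed.

Lemma Adef_setXt A m n (X : set ('I_m -> R)) (Y : set ('I_n -> R)) :
  Adef Def A X -> Adef Def A Y -> Adef Def A (setXt X Y).
Proof.
move=> /(Adef_reindex (fun i => lshift n i)) hX /(Adef_reindex (fun i => rshift m i)) hY.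
by apply: Adef_ext (Adef_setI hX hY) => z; rewrite setXtE.
Qed.

Lemma def_fiber_covered k N (Z : set ('I_(1 + k) -> R)) : Def (1 + k) Z ->
  Def k [set q | exists y : 'I_N -> R,
    forall x : 'I_1 -> R, Z (cat_t x q) -> exists j, x = (fun _ => y j)].
Proof.
move=> hZ.
pose h := cat_t (fun _ : 'I_1 => rshift (k + N) ord0) (fun i : 'I_k => lshift 1 (lshift N i)).
have hE q y x : (fun i => cat_t (cat_t q y) x (h i)) = cat_t x q.
  by apply: cat_t_compE => i; rewrite ?cat_t_rshift ?cat_t_lshift ?(ord1 i).
pose V := [set w : 'I_((k + N) + 1) -> R | Z (fun i => w (h i)) /\
   forall j : 'I_N, w (rshift (k + N) ord0) <> w (lshift 1 (rshift k j))].
have DV : Def _ V.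
  apply: def_setI; first exact: def_reindex.
  by apply: def_bigI => j; apply: def_setC; apply: def_coord_eq.
(* the complement of "some x in the fiber avoids all the y j" *)
apply: def_ext (def_exists (def_setC (def_exists DV))) => q /=.
split; case=> y hy; exists y.
  move=> x Zx; apply: contrapT => nj; apply: hy; exists x; split; first by rewrite hE.
  move=> j; rewrite cat_t_rshift cat_t_lshift cat_t_rshift => e; apply: nj; exists j.
  by rewrite (tup1E x) e.
case=> x [+ hj]; rewrite hE => /hy [j ej]; apply: (hj j).
by rewrite cat_t_rshift cat_t_lshift cat_t_rshift ej.
Qed.

End Definable.

Section Pregeometry.
Context {R : topologicalType} {Def : forall n, set (set ('I_n -> R))}.
Arguments Def : clear implicits.
Hypothesis hs : is_structure Def.
Hypothesis hg : geometric Def.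

Lemma acl_params_sub (A B : set R) b : A `<=` B -> acl Def A b -> acl Def B b.
Proof. by move=> AB [X [hX fX Xb]]; exists X; split => //; apply: Adef_params_sub AB hX. Qed.

Lemma acl_self (A : set R) b : A b -> acl Def A b.
Proof.
move=> Ab; exists [set (fun _ : 'I_1 => b)].
by split; [exact: (Adef_set1 hs Ab) | exact: finite_set1 |].
Qed.

Lemma acl_trans (A B : set R) b : (forall z, B z -> acl Def A z) -> acl Def B b -> acl Def A b.
Proof.
move=> hBA [X [[k [p [hp [Z hZ EX]]]] fX Xb]].
have /choice [F hF] : forall i : 'I_k, exists F : set ('I_1 -> R),
    [/\ Adef Def A F, finite_set F & F (fun _ => p i)] by move=> i; apply: hBA.
pose Fp := [set q : 'I_k -> R | forall i, F i (fun _ => q i)].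
have AFp : Adef Def A Fp.
  apply: (Adef_bigI hs) => i; case: (hF i) => hA _ _.
  exact: (Adef_reindex hs (fun _ : 'I_1 => i) hA).
have fFp : finite_set Fp.
  apply: (finite_tuple_set (F := fun i => [set r | F i (fun _ => r)])) => i.
  case: (hF i) => _ hfi _; apply: sub_finite_set (finite_image (fun x => x ord0) hfi) => r Fr.
  by exists (fun _ => r).
have [N hN] := hg.2 k Z hZ.
pose Q := [set q : 'I_k -> R | exists y : 'I_N -> R,
  forall x : 'I_1 -> R, Z (cat_t x q) -> exists j, x = (fun _ => y j)].
have DQ : Def k Q := def_fiber_covered hs N hZ.
(* [b] lies in the union of the uniformly finite fibers of [Z] over the finite set [Fp] *)
pose W := [set x : 'I_1 -> R | exists q, Fp q /\ Q q /\ Z (cat_t x q)].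
exists W; split.
- have AV : Adef Def A [set w : 'I_(1 + k) -> R | Fp (rsubt w) /\ Q (rsubt w) /\ Z w].
    apply: (Adef_setI hs (Adef_reindex hs (fun i => rshift 1 i) AFp)).
    apply: (Adef_setI hs); last exact: (Adef_of_def hs A hZ).
    exact: (Adef_of_def hs A (def_reindex hs (fun i => rshift 1 i) DQ)).
  apply: Adef_ext (Adef_exists hs AV) => x.
  by split => -[q hq]; exists q; move: hq => /=; rewrite rsubt_cat.
- apply: (sub_finite_set (B := \bigcup_(q in Fp) [set x | Q q /\ Z (cat_t x q)])).
    by move=> x [q [Fq [Qq Zx]]]; exists q.
  apply: bigcup_finite => // q _.
  have [[y hy]|nQ] := pselect (Q q); last by apply: sub_finite_set (finite_set0 _) => x [].
  apply: sub_finite_set (finite_image (fun j : 'I_N => fun _ : 'I_1 => y j) (@finite_finset _ setT)).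
  by move=> x [_ /hy [j ->]]; exists j.
- exists p; split; first by move=> i; case: (hF i).
  have Zp : Z (cat_t (fun _ => b) p) by move: Xb; rewrite EX.
  split => //.
  have [f hf] := hN p (eq_ind _ finite_set fX _ EX).
  exists (fun j => f j ord0) => x Zx.
  by have [j _ ej] := hf x Zx; exists j; rewrite -ej -tup1E.
Qed.

Definition indep (A : set R) (L : seq R) :=
  uniq L /\ forall x, x \in L -> ~ acl Def (A `|` [set y | y \in L /\ y != x]) x.

Lemma indep_nil A : indep A [::].
Proof. by split. Qed.

Lemma indep_perm A L L' : perm_eq L L' -> indep A L -> indep A L'.
Proof.
move=> pLL' [uL hL]; split; first by rewrite -(perm_uniq pLL').
move=> x; rewrite -(perm_mem pLL') => xL; apply: contra_not (hL x xL).
by apply: acl_params_sub => z [Az|[zL zx]]; [left|right; split => //; rewrite (perm_mem pLL')].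
Qed.

Lemma indep_params_sub A B L : A `<=` B -> indep B L -> indep A L.
Proof.
move=> AB [uL hL]; split => // x xL; apply: contra_not (hL x xL).
by apply: acl_params_sub => z [Az|h]; [left; apply: AB|right].
Qed.

Lemma indep_cons A L x : indep A L -> ~ acl Def (A `|` [set` L]) x -> indep A (x :: L).
Proof.
move=> [uL hL] nx.
have xL : x \notin L by apply/negP => xL; apply: nx; apply: acl_self; right.
split; first by rewrite /= xL uL.
move=> y; rewrite inE; have [->|yx] := eqVneq y x => /= [_|yL].
  apply: contra_not nx; apply: acl_params_sub => z [Az|[]]; [by left|].
  by rewrite inE => /orP[/eqP->|zL]; [rewrite eqxx|right].
move=> h; apply: (hL y yL); set A' := A `|` _.
have h2 : acl Def (A' `|` [set x]) y.
  apply: acl_params_sub h => z [Az|[]]; first by left; left.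
  rewrite inE => /orP[/eqP->|zL zy]; first by right.
  by left; right.
apply: contrapT => ny; apply: nx.
apply: acl_params_sub (hg.1 _ _ _ h2 ny) => z [[Az|[zL _]]|->]; [by left|by right|by right].
Qed.

Lemma indep_cat A L M : indep A L -> indep (A `|` [set` L]) M -> indep A (L ++ M).
Proof.
elim: M L => [|m M IH] L hL hM; first by rewrite cats0.
have [uM hMm] := hM.
have nm : ~ acl Def (A `|` [set` L]) m.
  by apply: contra_not (hMm m (mem_head _ _)); apply: acl_params_sub => z hz; left.
have hL' : indep A (rcons L m).
  by apply: (indep_perm (L := m :: L)); [rewrite perm_sym perm_rcons | apply: indep_cons].
rewrite -cat_rcons; apply: IH => //.
move: uM => /= /andP[mM uM]; split => // y yM.
have ym : y != m by apply: contraNneq mM => <-.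
apply: contra_not (hMm y _); last by rewrite inE yM orbT.
apply: acl_params_sub => z [[Az|]|[zM zy]].
- by left; left.
- rewrite /= mem_rcons inE => /orP[/eqP->|zL]; last by left; right.
  by right; split; [rewrite mem_head|rewrite eq_sym].
- by right; split; [rewrite inE zM orbT|].
Qed.

Lemma indep_size_le_span K : forall A L, indep A L ->
  (forall x, x \in L -> acl Def (A `|` [set` K]) x) -> size L <= size K.
Proof.
elim: K => [|k K IH] A L [uL hL] hspan.
  case: L uL hL hspan => [//|x L] _ hL hspan; exfalso.
  apply: (hL x (mem_head _ _)).
  by apply: acl_params_sub (hspan x (mem_head _ _)) => z [Az|//]; left.
have [all|nall] := pselect (forall x, x \in L -> acl Def (A `|` [set` K]) x).
  exact: leq_trans (IH A L (conj uL hL) all) _.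
have [x xL nx] : exists2 x, x \in L & ~ acl Def (A `|` [set` K]) x.
  apply: contrapT => nex; apply: nall => x xL; apply: contrapT => nx; apply: nex; by exists x.
(* Steinitz exchange: trade [k] for [x]; [rem x L] is independent over [A + x] and spanned by [K]. *)
have hL' : indep (A `|` [set x]) (rem x L).
  split; first exact: rem_uniq.
  move=> y; rewrite mem_rem_uniq // inE => /andP[yx yL].
  apply: contra_not (hL y yL); apply: acl_params_sub => z [[Az|->]|[]].
  - by left.
  - by right; split => //; rewrite eq_sym.
  - by rewrite mem_rem_uniq // inE => /andP[_ zL] zy; right.
have hsp : forall y, y \in rem x L -> acl Def ((A `|` [set x]) `|` [set` K]) y.
  move=> y; rewrite mem_rem_uniq // inE => /andP[_ yL].
  apply: acl_trans (hspan y yL) => z [Az|].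
    by apply: acl_self; left; left.
  rewrite /= inE => /orP[/eqP->|zK]; last by apply: acl_self; right.
  have h1 : acl Def ((A `|` [set` K]) `|` [set k]) x.
    apply: acl_params_sub (hspan x xL) => w [Aw|].
      by left; left.
    by rewrite /= inE => /orP[/eqP->|wK]; [right|left; right].
  apply: acl_params_sub (hg.1 _ _ _ h1 nx) => w [[Aw|wK]|->].
  - by left; left.
  - by right.
  - by left; right.
have := IH _ _ hL' hsp.
have sL : 0 < size L by rewrite lt0n size_eq0; apply/eqP => L0; rewrite L0 in xL.
by rewrite size_rem //= => h; rewrite -(prednK sL) ltnS.
Qed.

Lemma dimt_min {n} (a : 'I_n -> R) A k : dimt_le Def a A k -> dimt Def a A <= k.
Proof.
move=> h; rewrite /dimt; case: ex_minnP => m _ minm; apply: minm.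
by apply/orP; left; apply/asboolP.
Qed.

Lemma dimt_spec {n} (a : 'I_n -> R) A : dimt_le Def a A (dimt Def a A).
Proof.
rewrite /dimt; case: ex_minnP => m /orP[/asboolP//|/eqP->] _.
exists (enum 'I_n); split; first by rewrite size_enum_ord.
by move=> i; apply: acl_self; right; exists i; rewrite ?mem_enum.
Qed.

Lemma dimt_ub {n} (a : 'I_n -> R) A : dimt Def a A <= n.
Proof. by rewrite /dimt; case: ex_minnP => m _; apply; rewrite /dimt_pred eqxx orbT. Qed.

Lemma dimt_params_sub {n} (a : 'I_n -> R) A B : A `<=` B -> dimt Def a B <= dimt Def a A.
Proof.
move=> AB; apply: dimt_min; have [I [sI hI]] := dimt_spec a A.
exists I; split => // i; apply: acl_params_sub (hI i) => z [Az|h]; [by left; apply: AB|by right].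
Qed.

Lemma set_mem_map {n} (a : 'I_n -> R) I : [set` map a I] = [set b | exists2 j, j \in I & b = a j].
Proof. by apply/predeqP => b; split => /mapP. Qed.

Lemma acl_basis_exists {n} (a : 'I_n -> R) A : exists I : seq 'I_n,
  indep A (map a I) /\ forall i, acl Def (A `|` [set` map a I]) (a i).
Proof.
suff: forall G : seq 'I_n, exists I : seq 'I_n,
    indep A (map a I) /\ forall j, j \in G -> acl Def (A `|` [set` map a I]) (a j).
  by case/(_ (enum 'I_n)) => I [hI hsp]; exists I; split => // i; apply: hsp; rewrite mem_enum.
elim => [|j G [I [hI hsp]]]; first by exists [::]; split => //; apply: indep_nil.
have [aj|naj] := pselect (acl Def (A `|` [set` map a I]) (a j)).
  by exists I; split => // j'; rewrite inE => /orP[/eqP->//|]; apply: hsp.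
exists (j :: I); split; first exact: indep_cons.
move=> j'; rewrite inE => /orP[/eqP->|j'G]; first by apply: acl_self; right; rewrite /= mem_head.
apply: acl_params_sub (hsp j' j'G) => z [Az|zI]; [by left|right].
by rewrite /= inE zI orbT.
Qed.

Lemma dimt_basis {n} (a : 'I_n -> R) A I : indep A (map a I) ->
  (forall i, acl Def (A `|` [set` map a I]) (a i)) -> dimt Def a A = size I.
Proof.
move=> hI hsp; apply/eqP; rewrite eqn_leq; apply/andP; split.
  by apply: dimt_min; exists I; split => // i; rewrite -set_mem_map.
have [K [sK hK]] := dimt_spec a A.
rewrite -(size_map a I); apply: leq_trans (indep_size_le_span (K := map a K) hI _) _.
  by move=> x /mapP [i _ ->]; rewrite set_mem_map.
by rewrite size_map.
Qed.

Lemma dimt_le_span {n} (a : 'I_n -> R) A K :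
  (forall i, acl Def (A `|` [set` K]) (a i)) -> dimt Def a A <= size K.
Proof.
move=> hK; have [I [hI hsp]] := acl_basis_exists a A.
rewrite (dimt_basis hI hsp) -(size_map a I).
by apply: (indep_size_le_span hI) => x /mapP [i _ ->].
Qed.

Lemma indep_size_le_dimt {n} (a : 'I_n -> R) A L : indep A L ->
  (forall x, x \in L -> exists i, x = a i) -> size L <= dimt Def a A.
Proof.
move=> hL hx; have [K [sK hK]] := dimt_spec a A.
apply: leq_trans (indep_size_le_span (K := map a K) hL _) _; last by rewrite size_map.
by move=> x /hx [i ->]; rewrite set_mem_map.
Qed.

Lemma dimt1_eq0 (x : 'I_1 -> R) A : dimt Def x A = 0 <-> acl Def A (x ord0).
Proof.
split => [h|h].
  have [I [sI hI]] := dimt_spec x A; move: sI; rewrite h leqn0 size_eq0 => /eqP I0.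
  by apply: acl_params_sub (hI ord0) => z [//|]; rewrite I0 => -[].
apply/eqP; rewrite -leqn0; apply: dimt_min; exists [::]; split => // i.
by rewrite (ord1 i); apply: acl_params_sub h => z Az; left.
Qed.

Lemma dimt_cat_ge {m n} (a : 'I_m -> R) (b : 'I_n -> R) A :
  dimt Def a A + dimt Def b (A `|` range a) <= dimt Def (cat_t a b) A.
Proof.
have [I [hI hspI]] := acl_basis_exists a A.
have [J [hJ hspJ]] := acl_basis_exists b (A `|` range a).
rewrite (dimt_basis hI hspI) (dimt_basis hJ hspJ) -(size_map a I) -(size_map b J) -size_cat.
apply: indep_size_le_dimt.
  apply: indep_cat => //; apply: indep_params_sub hJ => z [Az|/mapP [i _ ->]].
    by left.
  by right; exists i.
move=> x; rewrite mem_cat => /orP[/mapP [i _ ->]|/mapP [j _ ->]].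
  by exists (lshift n i); rewrite cat_t_lshift.
by exists (rshift m j); rewrite cat_t_rshift.
Qed.

Lemma dimt_cat_le {m n} (a : 'I_m -> R) (b : 'I_n -> R) A :
  dimt Def (cat_t a b) A <= dimt Def a A + dimt Def b A.
Proof.
have [I [sI hI]] := dimt_spec a A; have [J [sJ hJ]] := dimt_spec b A.
apply: dimt_min; exists (map (@lshift m n) I ++ map (@rshift m n) J); split.
  by rewrite size_cat !size_map; apply: leq_add.
move=> k; case: (split_ordP k) => i ->; rewrite ?cat_t_lshift ?cat_t_rshift.
  apply: acl_params_sub (hI i) => z [Az|[j jI ->]]; [by left|right].
  by exists (lshift n j); [rewrite mem_cat map_f | rewrite cat_t_lshift].
apply: acl_params_sub (hJ i) => z [Az|[j jI ->]]; [by left|right].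
by exists (rshift m j); [rewrite mem_cat map_f ?orbT | rewrite cat_t_rshift].
Qed.

End Pregeometry.
Arguments indep {R} Def A L.

Section ProductTopology.
Context {R : topologicalType}.

Lemma open_bigI_fin (I : finType) (P : I -> Prop) (F : I -> set R) :
  (forall i, open (F i)) -> open [set r | forall i, P i -> F i r].
Proof.
move=> hF; rewrite (_ : [set r | _] = [set r | forall i, i \in enum I -> P i -> F i r]); last first.
  by apply/predeqP => r; split => h i; [move=> _; apply: h | apply: h; rewrite mem_enum].
elim: (enum I) => [|i s IH].
  by rewrite (_ : [set r | _] = setT); [exact: openT | apply/predeqP => r; split].
rewrite (_ : [set r | _] = [set r | P i -> F i r] `&` [set r | forall j, j \in s -> P j -> F j r]).
  apply: openI => //; have [Pi|nPi] := pselect (P i).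
    by rewrite (_ : [set r | _] = F i) //; apply/predeqP => r; split => [|h _]; [apply|].
  by rewrite (_ : [set r | _] = setT); [exact: openT | apply/predeqP => r; split => // _ /nPi].
apply/predeqP => r; split.
  by move=> h; split => [|j js]; apply: h; rewrite inE ?eqxx ?js ?orbT.
by case=> h1 h2 j; rewrite inE => /orP[/eqP->//|]; apply: h2.
Qed.

Lemma openn_setT n : openn (@setT ('I_n -> R)).
Proof. by move=> x _; exists (fun _ => setT); split => // i; split => //; apply: openT. Qed.

Lemma openn_setI n (U V : set ('I_n -> R)) : openn U -> openn V -> openn (U `&` V).
Proof.
move=> hU hV x [Ux Vx].
have [O1 [h1 s1]] := hU x Ux; have [O2 [h2 s2]] := hV x Vx.
exists (fun i => O1 i `&` O2 i); split.
  by move=> i; case: (h1 i) => o1 x1; case: (h2 i) => o2 x2; split; [apply: openI|].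
by move=> y hy; split; [apply: s1 => i; case: (hy i)|apply: s2 => i; case: (hy i)].
Qed.

Lemma openn_reindex m n (h : 'I_m -> 'I_n) (O : set ('I_m -> R)) :
  openn O -> openn [set z : 'I_n -> R | O (fun i => z (h i))].
Proof.
move=> hO z Oz; have [Ob [hb sb]] := hO _ Oz.
exists (fun j => [set r | forall i, h i = j -> Ob i r]); split.
  move=> j; split; first by apply: open_bigI_fin => i; case: (hb i).
  by move=> i <-; case: (hb i).
by move=> y hy; apply: sb => i; apply: (hy (h i)).
Qed.
Arguments openn_reindex {m n} h {O}.

Lemma openn_setXt m n (U : set ('I_m -> R)) (V : set ('I_n -> R)) :
  openn U -> openn V -> openn (setXt U V).
Proof.
move=> /(openn_reindex (fun i => lshift n i)) oU /(openn_reindex (fun i => rshift m i)) oV.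
by apply: eq_ind (openn_setI oU oV) _ _; apply/predeqP => z; rewrite setXtE.
Qed.

Lemma openn_tup1 (U : set R) : open U -> openn [set x : 'I_1 -> R | U (x ord0)].
Proof.
move=> oU x Ux; exists (fun _ => U); split => [i|y hy]; [by rewrite (ord1 i)|exact: hy].
Qed.

Lemma openn_ropen n (W U : set ('I_n -> R)) : openn W -> ropen W U -> openn U.
Proof. by move=> oW [O [oO ->]]; apply: openn_setI. Qed.

Lemma ropen_sub n (X U : set ('I_n -> R)) : ropen X U -> U `<=` X.
Proof. by case=> O [_ ->] x []. Qed.

Lemma ropen_setXt m n (X U : set ('I_m -> R)) (Y V : set ('I_n -> R)) :
  ropen X U -> ropen Y V -> ropen (setXt X Y) (setXt U V).
Proof.
move=> [O1 [oO1 ->]] [O2 [oO2 ->]]; exists (setXt O1 O2); split; first exact: openn_setXt.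
by apply/predeqP => w; rewrite /= !setXtE; split => -[[? ?] [? ?]].
Qed.

Lemma contin_reindex m n (X : set ('I_n -> R)) (h : 'I_m -> 'I_n) :
  contin_on X (fun z => fun i => z (h i)).
Proof.
move=> x Xx O oO Ox; exists [set z | O (fun i => z (h i))]; split => //.
exact: openn_reindex.
Qed.

Lemma contin_sub m n (X Y : set ('I_m -> R)) (f : ('I_m -> R) -> ('I_n -> R)) :
  X `<=` Y -> contin_on Y f -> contin_on X f.
Proof.
move=> XY cf x Xx O oO Ox; have [W [oW Wx hW]] := cf x (XY _ Xx) O oO Ox.
by exists W; split => // y Xy Wy; apply: hW => //; apply: XY.
Qed.

Lemma contin_comp m n p (X : set ('I_m -> R)) (Y : set ('I_n -> R))
  (f : ('I_m -> R) -> ('I_n -> R)) (g : ('I_n -> R) -> ('I_p -> R)) :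
  (forall x, X x -> Y (f x)) -> contin_on X f -> contin_on Y g ->
  contin_on X (fun x => g (f x)).
Proof.
move=> XY cf cg x Xx O oO Ox.
have [W [oW Wx hW]] := cg (f x) (XY _ Xx) O oO Ox.
have [V [oV Vx hV]] := cf x Xx W oW Wx.
by exists V; split => // y Xy Vy; apply: hW; [apply: XY|apply: hV].
Qed.

Lemma contin_cat m n p (X : set ('I_m -> R)) (f : ('I_m -> R) -> ('I_n -> R))
  (g : ('I_m -> R) -> ('I_p -> R)) :
  contin_on X f -> contin_on X g -> contin_on X (fun x => cat_t (f x) (g x)).
Proof.
move=> cf cg x Xx O oO Ox.
have [Ob [hb sb]] := oO _ Ox.
have oOb n' (c : 'I_n' -> 'I_(n + p)) :
    openn [set y : 'I_n' -> R | forall i, Ob (c i) (y i)].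
  by move=> y hy; exists (fun i => Ob (c i)); split => // i; split => //; case: (hb (c i)).
have [W1 [oW1 W1x h1]] := cf x Xx _ (oOb _ (fun i => lshift p i))
  (fun i => eq_ind _ (Ob _) (proj2 (hb (lshift p i))) _ (cat_t_lshift _ _ _)).
have [W2 [oW2 W2x h2]] := cg x Xx _ (oOb _ (fun i => rshift n i))
  (fun i => eq_ind _ (Ob _) (proj2 (hb (rshift n i))) _ (cat_t_rshift _ _ _)).
exists (W1 `&` W2); split; [exact: openn_setI|by []|].
move=> y Xy [W1y W2y]; apply: sb => k.
by case: (split_ordP k) => i ->; rewrite ?cat_t_lshift ?cat_t_rshift; [apply: h1 | apply: h2].
Qed.

Lemma contin_lsubt m n (X : set ('I_(m + n) -> R)) : contin_on X lsubt.
Proof. exact: contin_reindex. Qed.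

Lemma contin_rsubt m n (X : set ('I_(m + n) -> R)) : contin_on X rsubt.
Proof. exact: contin_reindex. Qed.

Lemma contin_preimage n p (Y : set ('I_n -> R)) (g : ('I_n -> R) -> ('I_p -> R))
  (O : set ('I_p -> R)) :
  contin_on Y g -> openn O -> exists O', openn O' /\ forall y, Y y -> (O' y <-> O (g y)).
Proof.
move=> cg oO.
exists [set z | exists W, [/\ openn W, W z & forall y, Y y -> W y -> O (g y)]]; split.
  move=> z [W [oW Wz hW]]; have [Ob [hb sb]] := oW z Wz.
  by exists Ob; split => // y hy; exists W; split => //; exact: sb.
move=> y Yy; split; first by case=> W [_ Wy hW]; apply: hW.
by move=> Ogy; have [W [oW Wy hW]] := cg y Yy O oO Ogy; exists W; split.
Qed.

End ProductTopology.

Section Dimension.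
Context {R : topologicalType} {Def : forall n, set (set ('I_n -> R))}.
Arguments Def : clear implicits.
Hypothesis hs : is_structure Def.
Hypothesis hg : geometric Def.
Hypothesis generic_in_open : forall n (A B : set R) (X : set (tup R n)) d a,
  countable A -> countable B -> A `<=` B -> Adef Def A X -> hasdim Def X d -> X a ->
  dimt Def a A = d -> forall U, openn U -> U a -> exists b, [/\ U b, X b & dimt Def b B = d].

Lemma hasdim_exists n (X : set ('I_n -> R)) :
  definable Def X -> X !=set0 -> exists d, hasdim Def X d.
Proof.
move=> dX [x0 Xx0].
pose P k := `[< exists A a, [/\ Adef Def A X, X a & dimt Def a A = k] >].
have exP : exists k, P k by exists (dimt Def x0 setT); apply/asboolP; exists setT, x0.
have ubP k : P k -> k <= n by move=> /asboolP [A [a [_ _ <-]]]; apply: dimt_ub.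
case: (ex_maxnP exP ubP) => d /asboolP hd maxd.
by exists d; split => // A a hA Xa; apply: maxd; apply/asboolP; exists A, a.
Qed.

Lemma hasdim_finite_params n (X : set ('I_n -> R)) d : hasdim Def X d ->
  exists A0, [/\ finite_set A0, Adef Def A0 X & exists a, X a /\ dimt Def a A0 = d].
Proof.
move=> [[A [a [hA Xa da]]] hd].
have [A0 [fA0 A0A hA0]] := Adef_finite_params hA.
exists A0; split => //; exists a; split => //.
by apply/eqP; rewrite eqn_leq hd //= -da; apply: dimt_params_sub.
Qed.

Lemma hasdim_generic n (X : set ('I_n -> R)) d B : hasdim Def X d -> finite_set B ->
  exists a, X a /\ d <= dimt Def a B.
Proof.
move=> hX fB; have [A0 [fA0 hA0 [a [Xa da]]]] := hasdim_finite_params hX.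
have fAB : finite_set (A0 `|` B) by rewrite finite_setU.
have [b [_ Xb db]] := generic_in_open (finite_set_countable fA0) (finite_set_countable fAB)
   (fun z h => or_introl h) hA0 hX Xa da (@openn_setT R n) I.
by exists b; split => //; rewrite -db; apply: (dimt_params_sub hs) => z Bz; right.
Qed.

Lemma hasdim_le_sub n (X Y : set ('I_n -> R)) d e :
  X `<=` Y -> hasdim Def X d -> hasdim Def Y e -> d <= e.
Proof.
move=> XY hX hY; have [B [fB hB _]] := hasdim_finite_params hY.
have [a [Xa da]] := hasdim_generic hX fB.
by apply: leq_trans da _; apply: hY.2 => //; apply: XY.
Qed.

Lemma acl_unique_fiber m n (B : set R) (Z : set ('I_(m + n) -> R)) a y :
  Adef Def B Z -> Z (cat_t a y) -> (forall x, Z (cat_t x y) -> x = a) ->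
  forall i, acl Def (B `|` range y) (a i).
Proof.
move=> hZ Za uniq i.
have hFib : Adef Def (B `|` range y) [set x | Z (cat_t x y)].
  apply: (Adef_fiber hs) => [|j]; first by apply: Adef_params_sub hZ => z Bz; left.
  by right; exists j.
have hV : Adef Def (B `|` range y) [set w : 'I_(1 + m) -> R |
    Z (cat_t (rsubt w) y) /\ w (lshift m ord0) = w (rshift 1 i)].
  apply: (Adef_setI hs (Adef_reindex hs (fun j => rshift 1 j) hFib)).
  exact/(Adef_of_def hs)/(def_coord_eq hs).
exists [set t : 'I_1 -> R | exists x, Z (cat_t x y) /\ t ord0 = x i]; split.
- apply: Adef_ext (Adef_exists hs hV) => t; split => -[x hx]; exists x; move: hx => /=;
    by rewrite rsubt_cat cat_t_lshift cat_t_rshift.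
- apply: sub_finite_set (finite_set1 (fun _ : 'I_1 => a i)) => t [x [Zx e]].
  by rewrite (tup1E t) e (uniq _ Zx).
- by exists a.
Qed.

(* By injectivity, a generic point [a] of [X] is algebraic over [f a] and the parameters of the graph. *)
Lemma hasdim_le_inj p q (X : set ('I_p -> R)) (Y : set ('I_q -> R)) f d e :
  (forall x, X x -> Y (f x)) -> {in X &, injective f} ->
  definable Def (graph_on X f) -> hasdim Def X d -> hasdim Def Y e -> d <= e.
Proof.
move=> XY inj dG hX hY.
have [C [fC _ hC]] := Adef_finite_params dG.
have [D [fD hD _]] := hasdim_finite_params hY.
have fB : finite_set (C `|` D) by rewrite finite_setU.
have [a [Xa da]] := hasdim_generic hX fB.
have ye : dimt Def (f a) (C `|` D) <= e.
  by apply: hY.2; [apply: Adef_params_sub hD => z Dz; right | apply: XY].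
apply: leq_trans da (leq_trans _ ye).
have [J [hJ hspJ]] := acl_basis_exists hs hg (f a) (C `|` D).
rewrite (dimt_basis hs hg hJ hspJ) -(size_map (f a) J).
apply: (dimt_le_span hs hg) => i.
have hC' := Adef_params_sub (fun z h => or_introl h) hC : Adef Def (C `|` D) _.
have hf := acl_unique_fiber hC' (proj2 (graph_on_cat _ _ _ _) (conj Xa erefl)) _ i.
apply: (acl_trans hs hg _ (hf _)).
  by move=> z [Bz|[j _ <-]]; [apply: (acl_self hs); left | apply: hspJ].
by move=> x /graph_on_cat [Xx ex]; apply: inj; rewrite ?inE.
Qed.

Lemma hasdim_setXt m n (X : set ('I_m -> R)) (Y : set ('I_n -> R)) dm dn :
  hasdim Def X dm -> hasdim Def Y dn -> hasdim Def (setXt X Y) (dm + dn).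
Proof.
move=> hX hY.
have [AX [fAX hAX [x0 [Xx0 _]]]] := hasdim_finite_params hX.
have [AY [fAY hAY [y0 [Yy0 _]]]] := hasdim_finite_params hY.
have dXY : definable Def (setXt X Y).
  by apply: (Adef_setXt hs); [apply: Adef_params_sub hAX | apply: Adef_params_sub hAY].
have [e he] := hasdim_exists dXY (ex_intro _ (cat_t x0 y0) (proj2 (setXt_cat _ _ _ _) (conj Xx0 Yy0))).
suff -> : dm + dn = e by [].
have [A0 [fA0 hA0 [z [XYz dz]]]] := hasdim_finite_params he.
apply/eqP; rewrite eqn_leq; apply/andP; split; last first.
  rewrite -dz (cat_t_sub z); apply: leq_trans (dimt_cat_le hs _ _ _) _.
  move: XYz; rewrite setXtE => -[Xz Yz]; apply: leq_add.
    apply: hX.2 => //; apply: Adef_ext (Adef_exists hs hA0) => x.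
    by split; [case=> y /setXt_cat [] | move=> Xx; exists y0; apply/setXt_cat].
  apply: hY.2 => //; apply: Adef_ext (Adef_exists_l hs hA0) => y.
  by split; [case=> x /setXt_cat [] | move=> Yy; exists x0; apply/setXt_cat].
(* [a] generic in [X], then [b] generic in [Y] over [a]: [dimt] is additive along [cat_t a b] *)
pose B := AX `|` AY.
have fB : finite_set B by rewrite finite_setU.
have [a [Xa da]] := hasdim_generic hX fB.
have fBa : finite_set (B `|` range a) by rewrite finite_setU; split => //; apply/finite_image/finite_finset.
have [b [Yb db]] := hasdim_generic hY fBa.
apply: leq_trans (leq_add da db) (leq_trans (dimt_cat_ge hs hg a b B) _).
apply: he.2; last by apply/setXt_cat.
apply: (Adef_setXt hs); first by apply: Adef_params_sub hAX => w; left.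
by apply: Adef_params_sub hAY => w; right.
Qed.

End Dimension.

Section OpenSets.
Context {R : topologicalType} {Def : forall n, set (set ('I_n -> R))}.
Arguments Def : clear implicits.
Hypothesis hs : is_structure Def.
Hypothesis hg : geometric Def.
Hypothesis frontier_dim_lt : forall n A (X : set (tup R n)) d a,
  Adef Def A X -> hasdim Def X d -> clos (clos X `\` X) a -> (dimt Def a A < d)%N.
Hypothesis generic_in_open : forall n (A B : set R) (X : set (tup R n)) d a,
  countable A -> countable B -> A `<=` B -> Adef Def A X -> hasdim Def X d -> X a ->
  dimt Def a A = d -> forall U, openn U -> U a -> exists b, [/\ U b, X b & dimt Def b B = d].
Hypothesis hH : hausdorff_space R.
Hypothesis no_isolated : forall r : R, ~ open [set r].
Hypothesis definable_basis : exists k (B : set (tup R (1 + k))), Def (1 + k) B /\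
  (forall b : tup R k, open [set r : R | B (cat_t (fun _ => r) b)]) /\
  (forall (U : set R) r, open U -> U r -> exists b : tup R k,
    B (cat_t (fun _ => r) b) /\ [set r' : R | B (cat_t (fun _ => r') b)] `<=` U).

Lemma open_avoid_finite (U F : set R) r : open U -> U r -> finite_set F ->
  exists s, U s /\ ~ F s.
Proof.
move=> oU Ur fF; apply: contrapT => nex.
have UF : U `<=` F by move=> s Us; apply: contrapT => nFs; apply: nex; exists s.
have cl : closed (U `\` [set r]).
  apply: ((@accessible_finite_set_closed R).1 (hausdorff_accessible hH)).
  exact/finite_setD/(sub_finite_set UF fF).
apply: (@no_isolated r).
rewrite (_ : [set r] = U `&` ~` (U `\` [set r])); first by apply: openI; rewrite ?openC.
apply/predeqP => s; split => [->|[Us h]]; first by split => // -[_]; apply.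
by apply: contrapT => sr; apply: h.
Qed.

Lemma openn1_avoid_finite (V F : set ('I_1 -> R)) o : openn V -> V o -> finite_set F ->
  exists y, V y /\ ~ F y.
Proof.
move=> oV Vo fF; have [Ob [hb sb]] := oV o Vo; have [o1 x1] := hb ord0.
have [s [Os nFs]] := open_avoid_finite o1 x1 (finite_image (fun x => x ord0) fF).
exists (fun _ => s); split; first by apply: sb => i; rewrite (ord1 i).
by move=> Fs; apply: nFs; exists (fun _ => s).
Qed.

(* Were [O] of dimension 0, its generic point [o] would lie in a finite definable [F],
   and in the frontier of [O `\` F], against [frontier_dim_lt]. *)
Lemma open_nonalgebraic_point (O : set ('I_1 -> R)) (B : set R) :
  openn O -> definable Def O -> O !=set0 -> finite_set B ->
  exists x, O x /\ ~ acl Def B (x ord0).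
Proof.
move=> oO dO nO fB.
have [e he] := hasdim_exists dO nO.
have : e <= 1 by case: he => -[A [a [_ _ <-]]] _; apply: dimt_ub.
rewrite leq_eqVlt ltnS leqn0 => /orP[/eqP e1|/eqP e0]; subst e.
  have [x [Ox dx]] := hasdim_generic hs generic_in_open he fB.
  by exists x; split => // ax; move: dx; rewrite (proj2 (dimt1_eq0 hs x B) ax).
have [A0 [fA0 hA0 [o [Oo dob]]]] := hasdim_finite_params hs he.
have [F [hF fF Fo]] := (dimt1_eq0 hs o A0).1 dob.
have hX : Adef Def A0 (O `\` F) by apply: (Adef_setD hs).
have [y [Oy nFy]] := openn1_avoid_finite oO Oo fF.
have [e' he'] := hasdim_exists (Adef_params_sub (fun z _ => I) hX) (ex_intro _ y (conj Oy nFy)).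
have e0 : e' = 0.
  by apply/eqP; rewrite -leqn0; apply: (hasdim_le_sub hs generic_in_open _ he' he) => z [].
rewrite e0 in he'; suff: (dimt Def o A0 < 0)%N by rewrite ltn0.
apply: frontier_dim_lt hX he' _ => U oU Uo; exists o; split => //; split.
  move=> U' oU' U'o.
  have [z [[U'z Oz] nFz]] := openn1_avoid_finite (openn_setI oU' oO) (conj U'o Oo) fF.
  by exists z.
by case=> _; rewrite (tup1E o).
Qed.

Lemma indep_point_in_opens n (F : 'I_n -> set ('I_1 -> R)) A :
  (forall i, [/\ openn (F i), definable Def (F i) & F i !=set0]) -> finite_set A ->
  exists q : 'I_n -> R, (forall i, F i (fun _ => q i)) /\ n <= dimt Def q A.
Proof.
move=> hF fA.
have /choice [pt hpt] : forall i, exists x, F i x by move=> i; case: (hF i).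
have build m : m <= n -> exists L : seq R, [/\ size L = m,
    forall i : 'I_n, i < m -> F i (fun _ => nth (pt i ord0) L i) & indep Def A L].
  elim: m => [_|m IH lemn]; first by exists [::]; split => //; apply: indep_nil.
  have [L [sL hL iL]] := IH (ltnW lemn).
  have fAL : finite_set (A `|` [set` L]) by rewrite finite_setU; split => //; apply: finite_seq.
  have [o1 d1 n1] := hF (Ordinal lemn).
  have [x [Fx nx]] := open_nonalgebraic_point o1 d1 n1 fAL.
  exists (rcons L (x ord0)); split.
  - by rewrite size_rcons sL.
  - move=> i; rewrite ltnS leq_eqVlt => /orP[/eqP ei|lti].
      rewrite nth_rcons sL ei ltnn eqxx (tup1E x) in Fx *.
      by rewrite (_ : i = Ordinal lemn) //; apply: val_inj.
    by rewrite nth_rcons sL lti; apply: hL.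
  - apply: (indep_perm (L := x ord0 :: L)); first by rewrite perm_sym perm_rcons.
    exact: (indep_cons hs hg).
have [L [sL hL iL]] := build n (leqnn n).
exists (fun i => nth (pt i ord0) L i); split => [i|]; first exact/hL/ltn_ord.
rewrite -[X in X <= _]sL; apply: (indep_size_le_dimt hs) => // x xL.
have il : index x L < n by rewrite -sL index_mem.
by exists (Ordinal il); rewrite /= nth_index.
Qed.

Lemma hasdim_openn n (W : set ('I_n -> R)) :
  openn W -> definable Def W -> W !=set0 -> hasdim Def W n.
Proof.
move=> oW dW [w Ww].
have [e he] := hasdim_exists dW (ex_intro _ w Ww).
suff ne : n <= e.
  have en : e <= n by case: he => -[A [a [_ _ <-]]] _; apply: dimt_ub.
  have E : e = n by apply/eqP; rewrite eqn_leq en ne.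
  by rewrite E in he.
have [Ob [hOb sOb]] := oW w Ww.
have [k [Bs [DBs [oBs bBs]]]] := definable_basis.
have /choice [b hbi] : forall i : 'I_n, exists b : 'I_k -> R,
    Bs (cat_t (fun _ => w i) b) /\ [set r' : R | Bs (cat_t (fun _ => r') b)] `<=` Ob i.
  by move=> i; case: (hOb i) => o1 x1; apply: bBs.
have [D [fD _ hD]] := Adef_finite_params dW.
pose A := D `|` \bigcup_(i in [set: 'I_n]) range (b i).
have fA : finite_set A.
  rewrite finite_setU; split => //; apply: bigcup_finite => [|i _]; first exact: finite_finset.
  exact/finite_image/finite_finset.
pose Bas i := [set x : 'I_1 -> R | Bs (cat_t (fun _ => x ord0) (b i))].
have BasP i : [/\ openn (Bas i), definable Def (Bas i) & Bas i !=set0].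
  split; first exact: (openn_tup1 (oBs (b i))).
    apply: Adef_ext (Adef_fiber hs (Adef_of_def hs setT DBs) (y := b i) (fun=> I)) => x /=.
    by rewrite /Bas /= -(tup1E x).
  by exists (fun _ => w i); rewrite /Bas /=; case: (hbi i).
have [q [Basq dq]] := indep_point_in_opens BasP fA.
apply: leq_trans dq (he.2 _ _ (Adef_params_sub (fun z Dz => or_introl Dz) hD) _).
by apply: sOb => i; case: (hbi i) => _; apply; apply: Basq.
Qed.

End OpenSets.

Section Lore.
Context {R : topologicalType} {Def S : forall n, set (set ('I_n -> R))}.
Arguments Def : clear implicits.
Arguments S : clear implicits.
Hypothesis hs : is_structure Def.
Hypothesis hl : lore Def S.

Lemma lore_def n X : S n X -> definable Def X. Proof. by case: hl => h _ _ _ _; apply: h. Qed.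
Lemma lore_setT1 : S 1 setT. Proof. by case: hl => _ []. Qed.
Lemma lore_diag : S 2 diag2. Proof. by case: hl => _ []. Qed.
Lemma lore_setXt m n X Y : S m X -> S n Y -> S (m + n) (setXt X Y).
Proof. by case: hl => _ [] _ _ h _ _ _ _ _; apply: h. Qed.
Lemma lore_setI n X Y : S n X -> S n Y -> S n (X `&` Y).
Proof. by case: hl => _ [] _ _ _ h _ _ _ _; apply: h. Qed.
Lemma lore_perm n (s : {perm 'I_n}) X : S n X -> S n (perm_set s X).
Proof. by case: hl => _ [] _ _ _ _ h _ _ _; apply: h. Qed.
Lemma lore_homeo_image m n (X : set ('I_m -> R)) (Y : set ('I_n -> R)) f :
  homeo X Y f -> S m X -> S (m + n) (graph_on X f) -> S n Y.
Proof. by case: hl => _ _ h _ _; apply: h. Qed.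
Lemma lore_ropen n X U : S n X -> definable Def U -> ropen X U -> S n U.
Proof. by case: hl => _ _ _ [h _] _; apply: h. Qed.
Lemma lore_ext n (X Y : set ('I_n -> R)) : (forall x, X x <-> Y x) -> S n X -> S n Y.
Proof. by move=> /predeqP ->. Qed.

(* [R^0] is loric: by (iv) its loric open part [X'] leaves a complement of dimension [< 0]. *)
Lemma lore_setT0 : S 0 setT.
Proof.
case: hl => _ _ _ _ hiv.
have [X' [_ SX' _ hd]] := hiv 0 setT setT (Adef_setT hs setT 0) (ex_intro _ tup0 I).
have hT : hasdim Def (@setT ('I_0 -> R)) 0.
  split; last by move=> A a _ _; apply: dimt_ub.
  by exists setT, tup0; split => //; [apply: Adef_setT | apply/eqP; rewrite -leqn0; apply: dimt_ub].
have X't : X' tup0.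
  apply: contrapT => nX; suff: (dimt Def tup0 setT < 0)%N by rewrite ltn0.
  by apply: (hd 0 hT) => //; apply: (Adef_setD hs); [apply: Adef_setT | apply: lore_def SX'].
by apply: lore_ext SX' => x; split => // _; rewrite (tup0E x).
Qed.

Lemma lore_setT N : S N setT.
Proof.
elim: N => [|N IH]; first exact: lore_setT0.
by apply: lore_ext (lore_setXt lore_setT1 IH) => x; split => // _; apply/setXtE.
Qed.

Lemma lore_coord_eq N (p q : 'I_N) : S N [set z | z p = z q].
Proof. exact: (P_coord_eq lore_setT lore_setXt lore_perm lore_diag). Qed.

Lemma lore_bigI N (I : finType) (F : I -> set ('I_N -> R)) :
  (forall i, S N (F i)) -> S N [set z | forall i, F i z].
Proof. exact: (P_bigI lore_setT lore_setI). Qed.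

Lemma lore_graph_reindex N M (T : set ('I_N -> R)) (h : 'I_M -> 'I_N) :
  S N T -> S (N + M) (graph_on T (fun z => fun i => z (h i))).
Proof.
move=> ST.
have := lore_setI (lore_setXt ST (lore_setT M)) (lore_bigI (F := fun j =>
  [set w : 'I_(N + M) -> R | w (lshift M (h j)) = w (rshift N j)]) (fun j => lore_coord_eq _ _)).
apply: lore_ext => w; rewrite graph_onE; split.
  by case=> /setXtE [Tw _] hj; split => //; apply: funext => j; exact: (esym (hj j)).
case=> Tw e; split; first by apply/setXtE.
by move=> j /=; have := f_equal (fun f => f j) e; rewrite /rsubt /lsubt /= => ->.
Qed.

Lemma lore_reindex_image N M (T : set ('I_N -> R)) (G : set ('I_M -> R)) (h : 'I_M -> 'I_N) :
  S N T -> homeo T G (fun z => fun i => z (h i)) -> S M G.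
Proof. by move=> ST hom; apply: lore_homeo_image hom ST (lore_graph_reindex _ ST). Qed.

Lemma lore_reindex N M (T : set ('I_N -> R)) (h : 'I_N -> 'I_M) :
  S N T -> S M [set z | T (fun i => z (h i))].
Proof.
move=> ST.
pose P := [set w : 'I_(N + M) -> R | T (lsubt w) /\ forall i, w (lshift M i) = w (rshift N (h i))].
have SP : S _ P.
  apply: lore_setI.
    by apply: lore_ext (lore_setXt ST (lore_setT M)) => w; rewrite setXtE; split => [[]|].
  exact: (lore_bigI (F := fun i => [set w : 'I_(N + M) -> R | w (lshift M i) = w (rshift N (h i))])
    (fun i => lore_coord_eq _ _)).
(* [P] is the graph of the reindexing map, with [T] pulled back to the second factor *)
apply: (lore_reindex_image (h := fun j => rshift N j) SP); split.
  move=> w [Tw e] /=; suff <- : lsubt w = (fun i => w (rshift N (h i))) by [].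
  by apply: funext => i; exact: e.
exists (fun z => cat_t (fun i => z (h i)) z); split.
- by move=> z Tz; split; [rewrite lsubt_cat | move=> i; rewrite cat_t_lshift cat_t_rshift].
- move=> w [Tw e]; rewrite [RHS]cat_t_sub; congr cat_t.
  by apply: funext => i; rewrite /lsubt e.
- by move=> z _; apply: funext => j; rewrite cat_t_rshift.
- exact: contin_reindex.
- by apply: contin_cat; [exact: contin_reindex | exact: (contin_reindex (h := id))].
Qed.

End Lore.

Section Homeomorphisms.
Context {R : topologicalType}.

Lemma contin_cat_map m n p q (X : set ('I_m -> R)) (Y : set ('I_n -> R))
  (f : ('I_m -> R) -> ('I_p -> R)) (g : ('I_n -> R) -> ('I_q -> R)) :
  contin_on X f -> contin_on Y g -> contin_on (setXt X Y) (cat_map f g).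
Proof.
move=> cf cg; apply: contin_cat.
  by apply: contin_comp cf; [move=> w /setXtE [] | exact: contin_lsubt].
by apply: contin_comp cg; [move=> w /setXtE [] | exact: contin_rsubt].
Qed.

Lemma homeo_setXt m n p q (X : set ('I_m -> R)) (Y : set ('I_n -> R))
  (X' : set ('I_p -> R)) (Y' : set ('I_q -> R)) f g :
  homeo X X' f -> homeo Y Y' g -> homeo (setXt X Y) (setXt X' Y') (cat_map f g).
Proof.
move=> [fX [f' [f'X ff' f'f cf cf']]] [gY [g' [g'Y gg' g'g cg cg']]].
split; first by move=> w /setXtE [Xl Yr]; apply/setXt_cat; split; [apply: fX | apply: gY].
exists (cat_map f' g'); split.
- by move=> v /setXtE [Xl Yr]; apply/setXt_cat; split; [apply: f'X | apply: g'Y].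
- by move=> w /setXtE [Xl Yr]; rewrite /cat_map lsubt_cat rsubt_cat ff' // gg' // -cat_t_sub.
- by move=> v /setXtE [Xl Yr]; rewrite /cat_map lsubt_cat rsubt_cat f'f // g'g // -cat_t_sub.
- exact: contin_cat_map.
- exact: contin_cat_map.
Qed.

Lemma homeo_restrict m n (X U : set ('I_m -> R)) (Y : set ('I_n -> R)) f :
  homeo X Y f -> U `<=` X -> homeo U (f @` U) f.
Proof.
move=> [fXY [g [gYX gf fg cf cg]]] UX; split => [x Ux|]; first by exists x.
exists g; split.
- by move=> _ [x Ux <-]; rewrite gf //; apply: UX.
- by move=> x /UX; apply: gf.
- by move=> _ [x Ux <-]; rewrite gf //; apply: UX.
- exact: contin_sub cf.
- by apply: contin_sub cg => _ [x Ux <-]; apply/fXY/UX.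
Qed.

Lemma homeo_image_ropen m n (X U : set ('I_m -> R)) (Y : set ('I_n -> R)) f :
  homeo X Y f -> ropen X U -> ropen Y (f @` U).
Proof.
move=> [fXY [g [gYX gf fg _ cg]]] [O [oO ->]].
have [O' [oO' hO']] := contin_preimage cg oO.
exists O'; split => //; apply/predeqP => y; split.
  by case=> x [Xx Ox] <-; split; [apply: fXY | apply/hO'; [apply: fXY | rewrite gf]].
by case=> Yy /(hO' _ Yy) Ogy; exists (g y); [split => //; apply: gYX | apply: fg].
Qed.

Lemma homeo_comp m n p (X : set ('I_m -> R)) (Y : set ('I_n -> R)) (Z : set ('I_p -> R)) f h :
  homeo X Y f -> homeo Y Z h -> homeo X Z (fun x => h (f x)).
Proof.
move=> [fXY [f' [f'YX ff' f'f cf cf']]] [hYZ [h' [h'ZY hh' h'h ch ch']]].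
split; first by move=> x Xx; apply/hYZ/fXY.
exists (fun z => f' (h' z)); split.
- by move=> z Zz; apply/f'YX/h'ZY.
- by move=> x Xx; rewrite hh' ?ff' //; apply: fXY.
- by move=> z Zz; rewrite f'f ?h'h //; apply: h'ZY.
- exact: contin_comp cf ch.
- exact: contin_comp h'ZY ch' cf'.
Qed.

Lemma homeo_inj m n (X : set ('I_m -> R)) (Y : set ('I_n -> R)) f :
  homeo X Y f -> {in X &, injective f}.
Proof.
by move=> [_ [g [_ gf _ _ _]]] x x' /set_mem Xx /set_mem Xx' e; rewrite -(gf x Xx) e gf.
Qed.

End Homeomorphisms.

Section LoricMaps.
Context {R : topologicalType} {Def S : forall n, set (set ('I_n -> R))}.
Arguments Def : clear implicits.
Arguments S : clear implicits.
Hypothesis hs : is_structure Def.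
Hypothesis hl : lore Def S.

Lemma def_graph_image m n (X U : set ('I_m -> R)) (f : ('I_m -> R) -> ('I_n -> R)) :
  definable Def (graph_on X f) -> definable Def U -> U `<=` X -> definable Def (f @` U).
Proof.
move=> dG dU UX.
have dU' : definable Def [set w : 'I_(m + n) -> R | U (lsubt w)] :=
  Adef_reindex hs (fun i => lshift n i) dU.
apply: Adef_ext (Adef_exists_l hs (Adef_setI hs dG dU')) => y; split.
  by case=> x [/graph_on_cat [_ ->]]; rewrite /= lsubt_cat => Ux; exists x.
case=> x Ux <-; exists x; split; first by apply/graph_on_cat; split => //; apply: UX.
by rewrite /= lsubt_cat.
Qed.

Lemma loric_homeo_def_image m n (X : set ('I_m -> R)) (Y : set ('I_n -> R)) f :
  loric_homeo S X Y f -> definable Def Y.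
Proof.
move=> [[_ Sg] [fXY [g [gYX _ fg _ _]]]].
apply: Adef_ext (Adef_exists_l hs (lore_def hl Sg)) => y; split.
  by case=> x /graph_on_cat [Xx ->]; apply: fXY.
by move=> Yy; exists (g y); apply/graph_on_cat; split; [apply: gYX | rewrite fg].
Qed.

Lemma loric_homeo_restrict m n (X U : set ('I_m -> R)) (Y : set ('I_n -> R)) f :
  loric_homeo S X Y f -> definable Def U -> ropen X U -> loric_homeo S U (f @` U) f.
Proof.
move=> [[cf Sg] hf] dU rU; have UX := ropen_sub rU.
split; last exact: homeo_restrict hf UX.
split; first exact: contin_sub cf.
have [O [oO EU]] := rU.
apply: (lore_ropen hl Sg).
  have dU' : definable Def [set w : 'I_(m + n) -> R | U (lsubt w)] :=
    Adef_reindex hs (fun i => lshift n i) dU.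
  apply: Adef_ext (Adef_setI hs (lore_def hl Sg) dU') => w.
  rewrite /= !graph_onE; split => [[[_ e] Ul] | [Ul e]]; first by [].
  by split => //; split => //; apply: UX.
exists [set w | O (lsubt w)]; split; first exact: (@openn_reindex R m (m + n) _ O oO).
by apply/predeqP => w; rewrite /= !graph_onE EU; split => [[[? ?] ?]|[[? ?] ?]].
Qed.

Lemma loric_homeo_sym m n (X : set ('I_m -> R)) (Y : set ('I_n -> R)) f :
  loric_homeo S X Y f -> exists g, loric_homeo S Y X g.
Proof.
move=> [[_ Sg] [fXY [g [gYX gf fg cf cg]]]]; exists g; split.
  split => //.
  have := lore_reindex hs hl (cat_t (fun i => rshift n i) (fun j => lshift m j)) Sg.
  apply: lore_ext => w; rewrite /= cat_t_comp graph_on_cat graph_onE.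
  change (X (rsubt w) /\ lsubt w = f (rsubt w) <-> Y (lsubt w) /\ rsubt w = g (lsubt w)).
  split => -[+ e]; first by rewrite e => Xr; split; [apply: fXY | rewrite gf].
  by rewrite e => Yl; split; [apply: gYX | rewrite fg].
by split => //; exists f; split.
Qed.

Lemma lore_graph_comp m n p (X : set ('I_m -> R)) (Y : set ('I_n -> R)) f h :
  (forall x, X x -> Y (f x)) -> contin_on X f ->
  S (m + n) (graph_on X f) -> S (n + p) (graph_on Y h) ->
  S (m + p) (graph_on X (fun x => h (f x))).
Proof.
move=> fXY cf Sf Sh.
(* the graph of [h \o f] is the image of [{(x, f x, h (f x))}] under forgetting the middle *)
pose T := [set w : 'I_((m + n) + p) -> R |
  graph_on X f (lsubt w) /\ graph_on Y h (cat_t (rsubt (lsubt w)) (rsubt w))].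
have ST : S _ T.
  apply: (lore_setI hl (lore_reindex hs hl (fun i => lshift p i) Sf)).
  have := lore_reindex hs hl (cat_t (fun i => lshift p (rshift m i)) (fun l => rshift (m + n) l)) Sh.
  by apply: lore_ext => w; rewrite /= cat_t_comp.
pose forget := cat_t (fun i => lshift p (lshift n i)) (fun l => rshift (m + n) l).
apply: (lore_reindex_image hs hl (h := forget) ST).
have forgetE w : (fun i => w (forget i)) = cat_t (lsubt (lsubt w)) (rsubt w) by rewrite cat_t_comp.
split.
  move=> w [/graph_onE [Xl el] /graph_on_cat [_ ez]].
  by rewrite forgetE ez el; apply/graph_on_cat.
exists (fun v => cat_t (cat_t (lsubt v) (f (lsubt v))) (rsubt v)); split.
- move=> v /graph_onE [Xl ev]; rewrite /T /= !lsubt_cat !rsubt_cat !graph_on_cat ev.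
  by split; split => //; apply: fXY.
- move=> w [/graph_onE [Xl el] /graph_on_cat [_ ez]].
  by rewrite forgetE lsubt_cat rsubt_cat -el -!cat_t_sub.
- by move=> v _; rewrite forgetE !lsubt_cat rsubt_cat -cat_t_sub.
- exact: contin_reindex.
- apply: contin_cat; last exact: contin_rsubt.
  apply: contin_cat; first exact: contin_lsubt.
  by apply: contin_comp cf; [move=> v /graph_onE [] | exact: contin_lsubt].
Qed.

Lemma loric_homeo_comp m n p (X : set ('I_m -> R)) (Y : set ('I_n -> R)) (Z : set ('I_p -> R)) f h :
  loric_homeo S X Y f -> loric_homeo S Y Z h -> loric_homeo S X Z (fun x => h (f x)).
Proof.
move=> [[cf Sf] hf] [[ch Sh] hh]; have [fXY _] := hf.
split; last exact: homeo_comp hf hh.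
by split; [exact: contin_comp cf ch | exact: lore_graph_comp fXY cf Sf Sh].
Qed.

Lemma lore_graph_cat_map m n p q (X : set ('I_m -> R)) (Y : set ('I_n -> R))
  (f : ('I_m -> R) -> ('I_p -> R)) (g : ('I_n -> R) -> ('I_q -> R)) :
  S (m + p) (graph_on X f) -> S (n + q) (graph_on Y g) ->
  S ((m + n) + (p + q)) (graph_on (setXt X Y) (cat_map f g)).
Proof.
move=> Sf Sg.
have Sf' := lore_reindex hs hl (cat_t (fun i => lshift (p + q) (lshift n i))
                                      (fun j => rshift (m + n) (lshift q j))) Sf.
have Sg' := lore_reindex hs hl (cat_t (fun i => lshift (p + q) (rshift m i))
                                      (fun j => rshift (m + n) (rshift p j))) Sg.
apply: lore_ext (lore_setI hl Sf' Sg') => w; rewrite /= !cat_t_comp !graph_on_cat graph_onE setXtE.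
change ((X (lsubt (lsubt w)) /\ lsubt (rsubt w) = f (lsubt (lsubt w))) /\
  Y (rsubt (lsubt w)) /\ rsubt (rsubt w) = g (rsubt (lsubt w)) <->
  (X (lsubt (lsubt w)) /\ Y (rsubt (lsubt w))) /\ rsubt w = cat_map f g (lsubt w)).
split; first by case=> -[Xl e1] [Yr e2]; split => //; rewrite /cat_map -e1 -e2 -cat_t_sub.
by case=> -[Xl Yr] ->; rewrite /cat_map lsubt_cat rsubt_cat.
Qed.

Lemma loric_homeo_setXt m n p q (X : set ('I_m -> R)) (Y : set ('I_n -> R))
  (X' : set ('I_p -> R)) (Y' : set ('I_q -> R)) f g :
  loric_homeo S X X' f -> loric_homeo S Y Y' g ->
  loric_homeo S (setXt X Y) (setXt X' Y') (cat_map f g).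
Proof.
move=> [[cf Sf] hf] [[cg Sg] hg]; split; last exact: homeo_setXt.
by split; [exact: contin_cat_map | exact: lore_graph_cat_map].
Qed.

End LoricMaps.

Section Manifolds.
Context {R : topologicalType} {Def S : forall n, set (set ('I_n -> R))}.
Arguments Def : clear implicits.
Arguments S : clear implicits.
Hypothesis hs : is_structure Def.
Hypothesis hg : geometric Def.
Hypothesis frontier_dim_lt : forall n A (X : set (tup R n)) d a,
  Adef Def A X -> hasdim Def X d -> clos (clos X `\` X) a -> (dimt Def a A < d)%N.
Hypothesis generic_in_open : forall n (A B : set R) (X : set (tup R n)) d a,
  countable A -> countable B -> A `<=` B -> Adef Def A X -> hasdim Def X d -> X a ->
  dimt Def a A = d -> forall U, openn U -> U a -> exists b, [/\ U b, X b & dimt Def b B = d].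
Hypothesis hH : hausdorff_space R.
Hypothesis no_isolated : forall r : R, ~ open [set r].
Hypothesis definable_basis : exists k (B : set (tup R (1 + k))), Def (1 + k) B /\
  (forall b : tup R k, open [set r : R | B (cat_t (fun _ => r) b)]) /\
  (forall (U : set R) r, open U -> U r -> exists b : tup R k,
    B (cat_t (fun _ => r) b) /\ [set r' : R | B (cat_t (fun _ => r') b)] `<=` U).
Hypothesis hl : lore Def S.

Lemma loric_homeo_hasdim m n (X : set ('I_m -> R)) (Y : set ('I_n -> R)) f d :
  loric_homeo S X Y f -> hasdim Def X d -> hasdim Def Y d.
Proof.
move=> hf hX; have [[_ Sf] [fXY _]] := hf.
have [g hg'] := loric_homeo_sym hs hl hf; have [[_ Sg] [gYX _]] := hg'.
have [x Xx] : X !=set0 by case: hX => -[A [a [_ Xa _]]] _; exists a.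
have [e hY] := hasdim_exists (loric_homeo_def_image hs hl hf) (ex_intro _ (f x) (fXY _ Xx)).
suff -> : d = e by [].
apply/eqP; rewrite eqn_leq.
rewrite (hasdim_le_inj hs hg generic_in_open fXY (homeo_inj hf.2) (lore_def hl Sf) hX hY).
by rewrite (hasdim_le_inj hs hg generic_in_open gYX (homeo_inj hg'.2) (lore_def hl Sg) hY hX).
Qed.

Lemma lman_pt_setXt m n ka kb (X : set ('I_ka -> R)) (Y : set ('I_kb -> R)) z :
  lman_pt Def S X m (lsubt z) -> lman_pt Def S Y n (rsubt z) ->
  lman_pt Def S (setXt X Y) (m + n) z.
Proof.
move=> [U1 [W1 [dU1 rU1 U1z oW1 [phi1 h1]]]] [U2 [W2 [dU2 rU2 U2z oW2 [phi2 h2]]]].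
exists (setXt U1 U2), (setXt W1 W2); split.
- exact: (Adef_setXt hs).
- exact: ropen_setXt.
- exact/setXtE.
- exact: openn_setXt.
- by exists (cat_map phi1 phi2); apply: (loric_homeo_setXt hs hl).
Qed.

Lemma lman_pt_loric_homeo n ka kb (X : set ('I_ka -> R)) (Y : set ('I_kb -> R)) f x :
  loric_homeo S X Y f -> X x -> lman_pt Def S X n x -> lman_pt Def S Y n (f x).
Proof.
move=> hf Xx [U [W [dU rU Ux oW [phi hphi]]]].
have [g hg'] := loric_homeo_sym hs hl (loric_homeo_restrict hs hl hf dU rU).
exists (f @` U), W; split.
- exact: (def_graph_image hs (lore_def hl hf.1.2) dU (ropen_sub rU)).
- exact: homeo_image_ropen hf.2 rU.
- by exists x.
- exact: oW.
- by exists (fun y => phi (g y)); apply: (loric_homeo_comp hs hl hg' hphi).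
Qed.

Lemma lman_pt_ropen n k (Y U : set ('I_k -> R)) u :
  lman_pt Def S Y n u -> definable Def U -> ropen Y U -> U u -> lman_pt Def S U n u.
Proof.
move=> [V [W [dV [O1 [oO1 EV]] Vu oW [phi hphi]]]] dU [O2 [oO2 EU]] Uu.
have rV : ropen V (V `&` U).
  by exists O2; split => //; rewrite EU EV; apply/predeqP => x; rewrite /setI /=; tauto.
exists (V `&` U), (phi @` (V `&` U)); split.
- exact: (Adef_setI hs).
- by exists O1; split => //; rewrite EU EV; apply/predeqP => x; rewrite /setI /=; tauto.
- by [].
- exact: openn_ropen oW (homeo_image_ropen hphi.2 rV).
- by exists phi; apply: (loric_homeo_restrict hs hl hphi (Adef_setI hs dV dU) rV).
Qed.

Lemma loric_manifold_setXt m n ka kb (X : set ('I_ka -> R)) (Y : set ('I_kb -> R)) :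
  loric_manifold Def S m X -> loric_manifold Def S n Y -> loric_manifold Def S (m + n) (setXt X Y).
Proof.
move=> [dX hX lX] [dY hY lY]; split.
- exact: (Adef_setXt hs).
- exact: (hasdim_setXt hs hg generic_in_open).
- by move=> z /setXtE [Xz Yz]; apply: lman_pt_setXt; [apply: lX | apply: lY].
Qed.

Lemma loric_manifold_loric_homeo n ka kb (X : set ('I_ka -> R)) (Y : set ('I_kb -> R)) :
  lorically_homeomorphic S X Y -> loric_manifold Def S n X -> loric_manifold Def S n Y.
Proof.
move=> [f hf] [dX hX lX]; split.
- exact: (loric_homeo_def_image hs hl hf).
- exact: loric_homeo_hasdim hf hX.
- have [_ [_ [g [gYX _ fg _ _]]]] := hf.
  by move=> y Yy; rewrite -(fg y Yy); apply: (lman_pt_loric_homeo hf); [apply: gYX | apply/lX/gYX].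
Qed.

(* A chart domain [V] inside [U] has dimension [n], its image being open, and [V `<=` U `<=` Y]. *)
Lemma loric_manifold_ropen n k (Y U : set ('I_k -> R)) :
  loric_manifold Def S n Y -> definable Def U -> ropen Y U -> U !=set0 ->
  loric_manifold Def S n U.
Proof.
move=> [dY hY lY] dU rU [u Uu].
have lU u' : U u' -> lman_pt Def S U n u'.
  by move=> Uu'; apply: (lman_pt_ropen (lY _ (ropen_sub rU Uu')) dU rU Uu').
split => //.
have [V [W [dV rV Vu oW [phi hphi]]]] := lU u Uu.
have nW : W !=set0 by exists (phi u); apply: hphi.2.1.
have hW := hasdim_openn hs hg frontier_dim_lt generic_in_open hH no_isolated definable_basis
  oW (loric_homeo_def_image hs hl hphi) nW.
have [g hg'] := loric_homeo_sym hs hl hphi.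
have hV := loric_homeo_hasdim hg' hW.
have [e hU] := hasdim_exists dU (ex_intro _ u Uu).
suff -> : n = e by [].
apply/eqP; rewrite eqn_leq (hasdim_le_sub hs generic_in_open (ropen_sub rV) hV hU).
exact: (hasdim_le_sub hs generic_in_open (ropen_sub rU) hU hY).
Qed.

End Manifolds.

Theorem lemma2p19 (R : topologicalType) (Def : forall n, set (set ('I_n -> R)))
  (S : forall n, set (set ('I_n -> R)))
  (htmin : t_minimal Def) (hlore : lore Def S) :
  (forall (m n ka kb : nat) (X : set ('I_ka -> R)) (Y : set ('I_kb -> R)),
      loric_manifold Def S m X -> loric_manifold Def S n Y ->
      loric_manifold Def S (m + n) (setXt X Y)) /\
  (forall (n ka kb : nat) (X : set ('I_ka -> R)) (Y : set ('I_kb -> R)),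
      lorically_homeomorphic S X Y -> loric_manifold Def S n X ->
      loric_manifold Def S n Y) /\
  (forall (n k : nat) (Y U : set ('I_k -> R)),
      loric_manifold Def S n Y -> definable Def U -> ropen Y U -> U !=set0 ->
      loric_manifold Def S n U).
Proof.
have [[[hs hH] [hg _] frontier generic _] basis no_isolated] := htmin.
split; first exact: (loric_manifold_setXt hs hg generic).
split; first exact: (loric_manifold_loric_homeo hs hg generic hlore).
exact: (loric_manifold_ropen hs hg frontier generic hH no_isolated basis hlore).
Qed.
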